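(* Let $\hat K$ be the reference triangle with vertices $(0,0),(1,0),(0,1)$ and let $k\ge 0$. For each edge $f$ of $\hat K$ and each $0\le i\le k$, let $\mathscr{L}^{f,i}$ be the function on $\partial\hat K$ which vanishes off $f$ and equals on $f$ the Legendre polynomial of degree $i$ (in the arclength variable of $f$), normalised so that $\int_{\partial\hat K}(\mathscr{L}^{f,i})^2=1$. Let $$\Phi_k=\{\mathbf{u}\in \mathbb{P}_k(\hat K)^2:\ \nabla\cdot\mathbf{u}=0,\ \mathbf{u}\cdot\mathbf{n}_{out}=0 \text{ on }\partial\hat K\}.$$ Then every $\mathbf{u}\in\mathbb{P}_k(\hat K)^2$ with $\nabla\cdot\mathbf{u}=0$ can be uniquely decomposed as $$\mathbf{u}=\bar{\mathbf{v}}^0_{\mathbf{u}}+\bar{\mathbf{v}}^1_{\mathbf{u}}+\sum_{f}\sum_{i=1}^{k}\bar{\mathbf{v}}^{f,i}_{\mathbf{u}},$$ where the sum over $f$ runs over the three edges of $\hat K$, and (i) $\bar{\mathbf{v}}^0_{\mathbf{u}}\in\Phi_k$; (ii) $\bar{\mathbf{v}}^1_{\mathbf{u}}$ is a constant vector; (iii) each $\bar{\mathbf{v}}^{f,i}_{\mathbf{u}}\in\mathbb{P}_k(\hat K)^2$ is $L^2(\hat K)^2$-orthogonal to $\Phi_k$, satisfies $\nabla\cdot\bar{\mathbf{v}}^{f,i}_{\mathbf{u}}=0$, and its normal trace $\bar{\mathbf{v}}^{f,i}_{\mathbf{u}}\cdot\mathbf{n}_{out}|_{\partial\hat K}$ is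 $L^2(\partial\hat K)$-orthogonal to every $\mathscr{L}^{g,j}$ with $g$ an edge, $0\le j\le k$, and $(g,j)\neq(f,i)$.
   Context: $\mathbb{P}_k(\hat K)^2$ denotes vector fields on $\hat K$ whose two components are polynomials of total degree at most $k$; $\mathbf{n}_{out}$ is the outward unit normal on $\partial\hat K$. *)

From Stdlib Require Import Reals Lra List.
From Coquelicot Require Import Coquelicot.
Open Scope R_scope.

Fixpoint sumR (g : nat -> R) (n : nat) : R :=
  match n with O => 0 | S m => sumR g m + g m end.

Definition is_Pk (k : nat) (p : R -> R -> R) : Prop :=
  exists c : nat -> nat -> R, forall x y : R,
    p x y = sumR (fun i => sumR (fun j => c i j * x ^ i * y ^ j) (S k - i)) (S k).

Record VF := mkVF { c1 : R -> R -> R ; c2 : R -> R -> R }.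

Definition is_Pk2 (k : nat) (u : VF) : Prop := is_Pk k (c1 u) /\ is_Pk k (c2 u).

Definition vadd (u v : VF) : VF :=
  mkVF (fun x y => c1 u x y + c1 v x y) (fun x y => c2 u x y + c2 v x y).
Definition vzero : VF := mkVF (fun _ _ => 0) (fun _ _ => 0).
Fixpoint vsum (g : nat -> VF) (n : nat) : VF :=
  match n with O => vzero | S m => vadd (vsum g m) (g m) end.

Definition veq (u v : VF) : Prop :=
  forall x y : R, c1 u x y = c1 v x y /\ c2 u x y = c2 v x y.

Definition is_const (v : VF) : Prop :=
  exists a b : R, forall x y : R, c1 v x y = a /\ c2 v x y = b.

Definition divg (u : VF) (x y : R) : R :=
  Derive (fun t => c1 u t y) x + Derive (fun t => c2 u x t) y.
Definition div_free (u : VF) : Prop := forall x y : R, divg u x y = 0.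

Definition L2K (u v : VF) : R :=
  RInt (fun x => RInt (fun y => c1 u x y * c1 v x y + c2 u x y * c2 v x y) 0 (1 - x)) 0 1.

Inductive edge := Ebot | Ehyp | Eleft.
Definition edges : list edge := Ebot :: Ehyp :: Eleft :: nil.

Definition elen (f : edge) : R :=
  match f with Ebot => 1 | Ehyp => sqrt 2 | Eleft => 1 end.

(* arclength parametrisation s in [0, elen f] of each edge *)
Definition epx (f : edge) (s : R) : R :=
  match f with Ebot => s | Ehyp => 1 - s / sqrt 2 | Eleft => 0 end.
Definition epy (f : edge) (s : R) : R :=
  match f with Ebot => 0 | Ehyp => s / sqrt 2 | Eleft => 1 - s end.

Definition enx (f : edge) : R :=
  match f with Ebot => 0 | Ehyp => / sqrt 2 | Eleft => -1 end.
Definition eny (f : edge) : R :=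
  match f with Ebot => -1 | Ehyp => / sqrt 2 | Eleft => 0 end.

(* a function on the boundary, given edgewise in the arclength variable *)
Definition bfun := edge -> R -> R.

Definition ntrace (u : VF) : bfun :=
  fun f s => c1 u (epx f s) (epy f s) * enx f + c2 u (epx f s) (epy f s) * eny f.

Definition L2B (p q : bfun) : R :=
  fold_right Rplus 0 (map (fun f => RInt (fun s => p f s * q f s) 0 (elen f)) edges).

(* Legendre polynomials on [-1,1]: legpair n x = (P_n x, P_(n+1) x),
   (n+2) P_(n+2) = (2n+3) x P_(n+1) - (n+1) P_n *)
Fixpoint legpair (n : nat) (x : R) : R * R :=
  match n with
  | O => (1, x)
  | S m => let (a, b) := legpair m x in
           (b, ((2 * INR m + 3) * x * b - (INR m + 1) * a) / (INR m + 2))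
  end.
Definition legendre (n : nat) (x : R) : R := fst (legpair n x).

Definition leg_edge (f : edge) (i : nat) (s : R) : R :=
  legendre i (2 * s / elen f - 1).

Definition edge_eqb (f g : edge) : bool :=
  match f, g with
  | Ebot, Ebot | Ehyp, Ehyp | Eleft, Eleft => true
  | _, _ => false
  end.

Definition scrL (f : edge) (i : nat) : bfun :=
  fun g s =>
    if edge_eqb g f then
      leg_edge f i s / sqrt (RInt (fun t => (leg_edge f i t) ^ 2) 0 (elen f))
    else 0.

Definition in_Phi (k : nat) (u : VF) : Prop :=
  is_Pk2 k u /\ div_free u /\
  (forall f s, 0 <= s <= elen f -> ntrace u f s = 0).

(* the decomposition u = v0 + v1 + sum_f sum_{i=1}^k V f i *)
Definition decomp_sum (k : nat) (v0 v1 : VF) (V : edge -> nat -> VF) : VF :=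
  vadd (vadd v0 v1)
       (vsum (fun i => vadd (vadd (V Ebot (S i)) (V Ehyp (S i))) (V Eleft (S i))) k).

Definition is_decomp (k : nat) (u v0 v1 : VF) (V : edge -> nat -> VF) : Prop :=
  veq u (decomp_sum k v0 v1 V) /\
  in_Phi k v0 /\
  is_const v1 /\
  (forall f i, (1 <= i <= k)%nat ->
     is_Pk2 k (V f i) /\
     (forall w, in_Phi k w -> L2K (V f i) w = 0) /\
     div_free (V f i) /\
     (forall g j, (j <= k)%nat -> (g <> f \/ j <> i) ->
        L2B (ntrace (V f i)) (scrL g j) = 0)).

(* The normal trace of [u] on an edge [f] is a polynomial of degree [k]; expand it in the
   Legendre basis [L_(f,j)].  The three constant coefficients are matched by one constant
   field, because their weighted sum is the total flux of [u], which vanishes: [u = curl psi]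
   for a polynomial stream function [psi], and the normal trace of a curl is the tangential
   derivative of [psi] along the closed boundary.  For [i >= 1], take the curl of the bubble
   [λ λ' P_i'] attached to [f]: its normal trace is the tangential derivative of
   [(1 - t^2) P_i'(t)] on [f], i.e. a multiple of [L_(f,i)] by Legendre's equation, and zero
   on the other edges; subtracting its [L^2] projection onto [Phi_k] keeps that trace and makes
   it orthogonal to [Phi_k].  What is left of [u] has zero normal trace and lies in [Phi_k].
   Uniqueness: the normal moments against the [L_(g,j)] determine the constant field and the
   edge fields, and a difference of two edge fields lies both in [Phi_k] and in its
   orthogonal complement. *)

From Stdlib Require Import Reals Lra Lia List FunctionalExtensionality Classical IndefiniteDescription.
From Coquelicot Require Import Coquelicot.
Open Scope R_scope.

Ltac fext := let x := fresh "x" in let y := fresh "y" in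
  apply functional_extensionality; intro x; try (apply functional_extensionality; intro y).

(* Coquelicot states many equalities at the type of a structure whose carrier is [R];
   [ring] only recognises them after this [change]. *)
Ltac R_eq := match goal with |- ?a = ?b => change (@eq R a b) end.
Ltac R_simpl := cbv beta; unfold zero, one, plus, opp, minus, scal; simpl; unfold mult; simpl; R_eq.
Ltac R_ring := R_simpl; ring.

(** * Real calculus *)

Lemma is_derive_ext_eq (f g : R -> R) (x l l' : R) :
  (forall t, f t = g t) -> l = l' -> is_derive f x l -> is_derive g x l'.
Proof. intros H ->; apply is_derive_ext; auto. Qed.

Lemma is_derive_Rplus (f g : R -> R) x df dg : is_derive f x df -> is_derive g x dg ->
  is_derive (fun t => f t + g t) x (df + dg).
Proof. intros; apply (is_derive_plus f g); auto. Qed.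

Lemma is_derive_Rminus (f g : R -> R) x df dg : is_derive f x df -> is_derive g x dg ->
  is_derive (fun t => f t - g t) x (df - dg).
Proof. intros; apply (is_derive_minus f g); auto. Qed.

Lemma is_derive_Rmult (f g : R -> R) x df dg : is_derive f x df -> is_derive g x dg ->
  is_derive (fun t => f t * g t) x (df * g x + f x * dg).
Proof. intros; apply (is_derive_mult f g); auto. intros; apply Rmult_comm. Qed.

Lemma is_derive_affine (a b x : R) : is_derive (fun t => b + a * t) x a.
Proof.
  pose proof (is_derive_Rplus _ _ x _ _ (is_derive_const b x)
    (is_derive_scal _ x a _ (is_derive_id x))) as D.
  eapply is_derive_ext_eq; [| |exact D]; [reflexivity|]. unfold zero, one; simpl. ring.
Qed.

Lemma is_derive_pow_id i x : is_derive (fun t => t ^ i) x (INR i * x ^ pred i).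
Proof.
  eapply is_derive_ext_eq; [| |exact (is_derive_pow (fun t => t) i x 1 (is_derive_id x))];
  intros; cbv beta; R_eq; ring.
Qed.

Lemma is_derive_0_const (h : R -> R) a b : (forall t, is_derive h t 0) -> h b = h a.
Proof.
  intros H. assert (E : is_RInt (fun _ => 0) a b (minus (h b) (h a))).
  { apply (is_RInt_derive h (fun _ => 0)); intros; auto. apply continuous_const. }
  apply (is_RInt_unique (V := R_CompleteNormedModule)) in E.
  rewrite RInt_const in E. unfold scal, minus, plus, opp in E; simpl in E.
  unfold mult in E; simpl in E. lra.
Qed.

Lemma continuous_Rmult (f g : R -> R) x : continuous f x -> continuous g x ->
  continuous (fun t => f t * g t) x.
Proof. intros; apply (continuous_mult f g); auto. Qed.

Lemma continuous_Rplus (f g : R -> R) x : continuous f x -> continuous g x ->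
  continuous (fun t => f t + g t) x.
Proof. intros; apply (continuous_plus f g); auto. Qed.

Lemma continuous_Rlin (f g : R -> R) l m x : continuous f x -> continuous g x ->
  continuous (fun t => l * f t + m * g t) x.
Proof. intros; apply continuous_Rplus; apply continuous_Rmult; auto; apply continuous_const. Qed.

Lemma ex_RInt_cont (f : R -> R) a b : (forall x, continuous f x) -> ex_RInt f a b.
Proof. intros; apply (ex_RInt_continuous (V := R_CompleteNormedModule)); auto. Qed.

Lemma RInt_lin (f g : R -> R) a b l m : ex_RInt f a b -> ex_RInt g a b ->
  RInt (fun t => l * f t + m * g t) a b = l * RInt f a b + m * RInt g a b.
Proof.
  intros Hf Hg. rewrite (RInt_plus (fun t => l * f t) (fun t => m * g t)).
  - rewrite (RInt_scal f), (RInt_scal g); auto.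
  - apply (ex_RInt_scal (V := R_CompleteNormedModule)); auto.
  - apply (ex_RInt_scal (V := R_CompleteNormedModule)); auto.
Qed.

Lemma RInt_Rmult_l (f : R -> R) c a b : ex_RInt f a b ->
  RInt (fun t => c * f t) a b = c * RInt f a b.
Proof. intros H. apply (RInt_scal (V := R_CompleteNormedModule) f a b c H). Qed.

Lemma RInt_zero_fun a b : RInt (fun _ => 0) a b = 0.
Proof. rewrite RInt_const. unfold scal; simpl; unfold mult; simpl; ring. Qed.

Lemma continuous_eps (f : R -> R) x0 : continuous f x0 -> forall e, e > 0 ->
  exists d, d > 0 /\ forall x, Rabs (x - x0) < d -> Rabs (f x - f x0) < e.
Proof.
  intros Hc e He. apply continuity_pt_filterlim in Hc.
  destruct (Hc e He) as [d [Hd H]]. exists d; split; auto.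
  intros x Hx. destruct (Req_dec x x0) as [->|]; [rewrite Rminus_diag, Rabs_R0; auto|].
  apply H. repeat split; auto.
Qed.

Lemma continuous_zero_right (f : R -> R) a eps : continuous f a -> eps > 0 ->
  (forall s, a < s <= a + eps -> f s = 0) -> f a = 0.
Proof.
  intros Hc He H. destruct (Req_dec (f a) 0); auto. exfalso.
  destruct (continuous_eps f a Hc (Rabs (f a))) as [d [Hd Hd']]; [apply Rabs_pos_lt; auto|].
  set (h := Rmin (d/2) eps).
  assert (0 < h) by (apply Rmin_pos; lra).
  assert (h <= d/2) by apply Rmin_l. assert (h <= eps) by apply Rmin_r.
  specialize (Hd' (a + h)). rewrite (H (a + h)) in Hd' by lra.
  rewrite Rminus_0_l, Rabs_Ropp in Hd'. replace (a + h - a) with h in Hd' by ring.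
  rewrite Rabs_pos_eq in Hd' by lra. specialize (Hd' ltac:(lra)). lra.
Qed.

(* Near a point where [f x0 > 0], [f > f x0 / 2] on some [[c, e]], contributing at least
   [(e - c) * f x0 / 2 > 0] to the integral. *)
Lemma RInt_ge0_eq0 (f : R -> R) a b : a < b -> (forall x, continuous f x) ->
  (forall x, a <= x <= b -> 0 <= f x) -> RInt f a b = 0 -> forall x, a <= x <= b -> f x = 0.
Proof.
  intros Hab Hc Hp HI x0 Hx0.
  destruct (Rle_lt_or_eq_dec 0 (f x0) (Hp x0 Hx0)) as [Hpos|]; auto. exfalso.
  destruct (continuous_eps f x0 (Hc x0) (f x0 / 2)) as [d [Hd Hd']]; [lra|].
  set (c := Rmax a (x0 - d/2)). set (e := Rmin b (x0 + d/2)).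
  assert (a <= c /\ x0 - d/2 <= c /\ c <= x0) as (Hc1 & Hc2 & Hc3)
    by (unfold c; repeat split; [apply Rmax_l|apply Rmax_r|apply Rmax_case; lra]).
  assert (e <= b /\ e <= x0 + d/2 /\ x0 <= e) as (He1 & He2 & He3)
    by (unfold e; repeat split; [apply Rmin_l|apply Rmin_r|apply Rmin_case; lra]).
  assert (Hce : c < e) by (unfold c, e; apply Rmax_case; apply Rmin_case; lra).
  assert (Hex : forall u v, ex_RInt f u v) by (intros; apply ex_RInt_cont; auto).
  rewrite <- (RInt_Chasles f a c b), <- (RInt_Chasles f c e b) in HI; auto.
  assert (0 <= RInt f a c) by (apply RInt_ge_0; auto; intros; apply Hp; lra).
  assert (0 <= RInt f e b) by (apply RInt_ge_0; auto; intros; apply Hp; lra).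
  assert (RInt (fun _ => f x0 / 2) c e <= RInt f c e).
  { apply RInt_le; [lra | apply (ex_RInt_const (V := R_CompleteNormedModule)) | auto | ].
    intros x Hx. specialize (Hd' x ltac:(apply Rabs_def1; lra)). apply Rabs_def2 in Hd'. lra. }
  rewrite RInt_const in H1. unfold scal in H1; simpl in H1; unfold mult in H1; simpl in H1.
  change plus with Rplus in HI.
  assert (0 < (e - c) * (f x0 / 2)) by (apply Rmult_lt_0_compat; lra). lra.
Qed.

Lemma sumR_ext g h n : (forall i, (i < n)%nat -> g i = h i) -> sumR g n = sumR h n.
Proof. induction n; simpl; intros; auto. rewrite IHn, H; auto. Qed.

Lemma sumR_plus g h n : sumR (fun i => g i + h i) n = sumR g n + sumR h n.
Proof. induction n; simpl; [ring| rewrite IHn; ring]. Qed.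

Lemma sumR_scal c g n : sumR (fun i => c * g i) n = c * sumR g n.
Proof. induction n; simpl; [ring| rewrite IHn; ring]. Qed.

Lemma sumR_eq0 g n : (forall i, (i < n)%nat -> g i = 0) -> sumR g n = 0.
Proof. induction n; simpl; intros H; [auto|]. rewrite IHn, H; auto; ring. Qed.

Lemma sumR_recl g n : sumR g (S n) = g O + sumR (fun i => g (S i)) n.
Proof. induction n; simpl in *; [ring| rewrite IHn; ring]. Qed.

Lemma sumR_single (F : nat -> R) i0 n : (i0 < n)%nat ->
  (forall i, (i < n)%nat -> i <> i0 -> F i = 0) -> sumR F n = F i0.
Proof.
  induction n; intros H1 H2; [lia|]. simpl. destruct (Nat.eq_dec n i0) as [->|].
  - rewrite (sumR_eq0 F i0); [ring|]. intros; apply H2; lia.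
  - rewrite IHn, (H2 n); [ring|lia|auto|lia|intros; apply H2; lia].
Qed.

Lemma is_derive_sumR (F : nat -> R -> R) (F' : nat -> R) n t :
  (forall i, (i < n)%nat -> is_derive (F i) t (F' i)) ->
  is_derive (fun s => sumR (fun i => F i s) n) t (sumR F' n).
Proof.
  induction n; intros H; simpl; [exact (is_derive_const 0 t)|].
  apply (is_derive_Rplus (fun s => sumR (fun i => F i s) n) (F n)); auto.
Qed.

Lemma continuous_sumR (F : nat -> R -> R) n s : (forall i, (i < n)%nat -> continuous (F i) s) ->
  continuous (fun s => sumR (fun i => F i s) n) s.
Proof.
  induction n; simpl; intros H; [apply continuous_const|].
  apply continuous_Rplus; [apply IHn; intros|]; apply H; lia.
Qed.


(** * Univariate polynomials *)

(* Horner form: [upoly n p] says that [p] has degree at most [n]; [upoly_lc n p a] says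
   moreover that its coefficient of [s ^ n] is [a]. *)
Fixpoint upoly (n : nat) (p : R -> R) : Prop :=
  match n with
  | O => exists c, p = fun _ => c
  | S m => exists c p1, upoly m p1 /\ p = fun s => c + s * p1 s
  end.

Fixpoint upoly_lc (n : nat) (p : R -> R) (a : R) : Prop :=
  match n with
  | O => p = fun _ => a
  | S m => exists c p1, upoly_lc m p1 a /\ p = fun s => c + s * p1 s
  end.

Lemma upoly_lc_upoly n p a : upoly_lc n p a -> upoly n p.
Proof.
  revert p; induction n; simpl; intros p H; [exists a; auto|].
  destruct H as (c & p1 & H1 & ->). exists c, p1; auto.
Qed.

Lemma upoly_ex_lc n p : upoly n p -> exists a, upoly_lc n p a.
Proof.
  revert p; induction n; simpl; intros p H.
  - destruct H as [c ->]; exists c; auto.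
  - destruct H as (c & p1 & H1 & ->). destruct (IHn _ H1) as [a Ha]. exists a, c, p1; auto.
Qed.

Lemma upoly_lc_lin n p q a b l m : upoly_lc n p a -> upoly_lc n q b ->
  upoly_lc n (fun s => l * p s + m * q s) (l * a + m * b).
Proof.
  revert p q; induction n; simpl; intros p q Hp Hq; [subst; auto|].
  destruct Hp as (c & p1 & H1 & ->), Hq as (d & q1 & H2 & ->).
  exists (l * c + m * d), (fun s => l * p1 s + m * q1 s). split; auto. fext; ring.
Qed.

Lemma upoly_lin n p q l m : upoly n p -> upoly n q -> upoly n (fun s => l * p s + m * q s).
Proof.
  intros Hp Hq. destruct (upoly_ex_lc _ _ Hp) as [a Ha], (upoly_ex_lc _ _ Hq) as [b Hb].
  eapply upoly_lc_upoly, upoly_lc_lin; eauto.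
Qed.

Lemma upoly_plus n p q : upoly n p -> upoly n q -> upoly n (fun s => p s + q s).
Proof.
  intros. replace (fun s => p s + q s) with (fun s => 1 * p s + 1 * q s) by (fext; ring).
  apply upoly_lin; auto.
Qed.

Lemma upoly_scal n p l : upoly n p -> upoly n (fun s => l * p s).
Proof.
  intros. replace (fun s => l * p s) with (fun s => l * p s + 0 * p s) by (fext; ring).
  apply upoly_lin; auto.
Qed.

Lemma upoly_lc_S0 n p : upoly n p -> upoly_lc (S n) p 0.
Proof.
  revert p; induction n; intros p H.
  - destruct H as [c ->]. exists c, (fun _ => 0). split; [reflexivity|fext; ring].
  - destruct H as (c & p1 & H1 & ->). exists c, p1; split; auto.
Qed.

Lemma upoly_lc_S0_inv m r : upoly_lc (S m) r 0 -> upoly m r.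
Proof.
  revert r; induction m; intros r (c & r1 & H1 & ->).
  - simpl in H1; subst. exists c. fext; ring.
  - exists c, r1; split; auto.
Qed.

Lemma upoly_le n m p : (n <= m)%nat -> upoly n p -> upoly m p.
Proof. induction 1; auto. intros; eapply upoly_lc_upoly, upoly_lc_S0; auto. Qed.

Lemma upoly_const n c : upoly n (fun _ => c).
Proof. apply upoly_le with O; [lia| exists c; auto]. Qed.

Lemma upoly_lc_mulx n p a : upoly_lc n p a -> upoly_lc (S n) (fun s => s * p s) a.
Proof. intros; exists 0, p; split; auto. fext; ring. Qed.

Lemma upoly_mulx n p : upoly n p -> upoly (S n) (fun s => s * p s).
Proof.
  intros H; destruct (upoly_ex_lc _ _ H) as [a Ha]. eapply upoly_lc_upoly, upoly_lc_mulx; eauto.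
Qed.

Lemma upoly_lc_affine n p a al be : upoly_lc n p a ->
  upoly_lc n (fun s => p (al * s + be)) (a * al ^ n).
Proof.
  revert p a; induction n; intros p a H.
  - simpl in *; subst. fext; ring.
  - destruct H as (c & p1 & H1 & ->).
    assert (Hq : upoly n (fun s => c + be * p1 (al * s + be))).
    { replace (fun s => c + be * p1 (al * s + be))
        with (fun s => 1 * c + be * p1 (al * s + be)) by (fext; ring).
      apply upoly_lin; [apply upoly_const|eapply upoly_lc_upoly, IHn; eauto]. }
    replace (a * al ^ S n) with (1 * 0 + al * (a * al ^ n)) by (simpl; ring).
    replace (fun s => c + (al * s + be) * p1 (al * s + be)) with
      (fun s => 1 * (c + be * p1 (al * s + be)) + al * (s * p1 (al * s + be))) by (fext; ring).
    apply upoly_lc_lin; [apply upoly_lc_S0 | apply upoly_lc_mulx, IHn]; auto.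
Qed.

Lemma upoly_affine n p al be : upoly n p -> upoly n (fun s => p (al * s + be)).
Proof.
  intros H; destruct (upoly_ex_lc _ _ H) as [a Ha]. eapply upoly_lc_upoly, upoly_lc_affine; eauto.
Qed.

Lemma upoly_is_derive n p : upoly n p ->
  exists p', upoly (pred n) p' /\ forall s, is_derive p s (p' s).
Proof.
  revert p; induction n; intros p Hp.
  - destruct Hp as [c ->]. exists (fun _ => 0); split; [exists 0; auto|].
    intros s; exact (is_derive_const c s).
  - destruct Hp as (c & p1 & H1 & ->). destruct n as [|n].
    + destruct H1 as [c1 ->]. exists (fun _ => c1); split; [exists c1; auto|].
      intros s. eapply is_derive_ext_eq; [| |apply (is_derive_affine c1 c s)]; [intros; R_ring|auto].
    + destruct (IHn _ H1) as (p1' & H2 & H3).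
      exists (fun s => p1 s + s * p1' s); split.
      * apply upoly_plus; [apply upoly_le with (S n); auto|apply upoly_mulx; auto].
      * intros s. eapply is_derive_ext_eq; [| |apply (is_derive_Rplus _ _ s _ _
          (is_derive_const c s) (is_derive_Rmult (fun t => t) p1 s _ _ (is_derive_id s) (H3 s)))];
        [reflexivity|]. R_ring.
Qed.

Lemma upoly_continuous n p : upoly n p -> forall s, continuous p s.
Proof.
  intros H s. destruct (upoly_is_derive n p H) as (p' & _ & Hd).
  apply (ex_derive_continuous p s). exists (p' s); auto.
Qed.

Lemma upoly_zero_near0 n p eps : eps > 0 -> upoly n p ->
  (forall s, 0 <= s <= eps -> p s = 0) -> forall s, p s = 0.
Proof.
  revert p; induction n; intros p He Hp H.
  - destruct Hp as [c ->]. intros; apply (H 0); lra.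
  - destruct Hp as (c & p1 & H1 & ->).
    assert (c = 0) as -> by (specialize (H 0 ltac:(lra)); simpl in H; lra).
    assert (H2 : forall s, 0 < s <= eps -> p1 s = 0).
    { intros s Hs. specialize (H s ltac:(lra)). simpl in H.
      rewrite Rplus_0_l in H. apply Rmult_integral in H; destruct H; [lra|auto]. }
    assert (H3 : p1 0 = 0).
    { apply (continuous_zero_right p1 0 eps); [eapply upoly_continuous; eauto|auto|].
      intros; apply H2; lra. }
    assert (H4 : forall s, p1 s = 0).
    { apply (IHn p1 He H1). intros s Hs. destruct (Req_dec s 0) as [->|]; auto. apply H2; lra. }
    intros s; rewrite H4; ring.
Qed.

Lemma upoly_zero_on n p a b : a < b -> upoly n p ->
  (forall s, a <= s <= b -> p s = 0) -> forall s, p s = 0.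
Proof.
  intros Hab Hp H s.
  assert (Hs : forall t, p (1 * t + a) = 0).
  { apply (upoly_zero_near0 n (fun t => p (1 * t + a)) (b - a)); [lra|apply upoly_affine; auto|].
    intros t Ht; apply H; lra. }
  specialize (Hs (s - a)). replace (1 * (s - a) + a) with s in Hs by ring. auto.
Qed.

Lemma upoly_span_triangular n p (q : nat -> R -> R) :
  (forall j, (j <= n)%nat -> exists l, l <> 0 /\ upoly_lc j (q j) l) -> upoly n p ->
  exists a : nat -> R, forall s, p s = sumR (fun j => a j * q j s) (S n).
Proof.
  revert p; induction n; intros p Hq Hp.
  - destruct (Hq O ltac:(lia)) as (l & Hl & H0). simpl in H0. destruct Hp as [c ->].
    exists (fun _ => c / l). intros s; simpl. rewrite H0. field; auto.
  - destruct (upoly_ex_lc _ _ Hp) as [ap Hap]. destruct (Hq (S n) ltac:(lia)) as (l & Hl & HqS).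
    set (r := fun s => 1 * p s + (- (ap / l)) * q (S n) s).
    assert (Hr : upoly n r).
    { apply upoly_lc_S0_inv. replace 0 with (1 * ap + (- (ap / l)) * l) by (field; auto).
      apply upoly_lc_lin; auto. }
    destruct (IHn r (fun j Hj => Hq j ltac:(lia)) Hr) as [a Ha].
    exists (fun j => if Nat.eqb j (S n) then ap / l else a j).
    intros s. change (sumR ?g (S (S n))) with (sumR g (S n) + g (S n)).
    cbv beta. rewrite Nat.eqb_refl, (sumR_ext _ (fun j => a j * q j s)), <- Ha.
    + unfold r. ring.
    + intros i Hi. destruct (Nat.eqb_spec i (S n)); [lia|auto].
Qed.

(** * Bivariate polynomials *)

(* Total degree at most [n], in nested Horner form. *)
Fixpoint bpoly (n : nat) (f : R -> R -> R) : Prop :=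
  match n with
  | O => exists c, f = fun _ _ => c
  | S m => exists c g h, bpoly m g /\ bpoly m h /\ f = fun x y => c + x * g x y + y * h x y
  end.

Lemma bpoly_ext n f g : (forall x y, f x y = g x y) -> bpoly n f -> bpoly n g.
Proof. intros H; replace g with f; auto. fext; auto. Qed.

Lemma bpoly_const n c : bpoly n (fun _ _ => c).
Proof.
  revert c; induction n; intros c; [exists c; auto|].
  exists c, (fun _ _ => 0), (fun _ _ => 0). repeat split; auto. fext; ring.
Qed.

Lemma bpoly_S n f : bpoly n f -> bpoly (S n) f.
Proof.
  revert f; induction n; intros f H.
  - destruct H as [c ->]. apply bpoly_const.
  - destruct H as (c & g & h & H1 & H2 & ->). exists c, g, h; auto.
Qed.

Lemma bpoly_le n m f : (n <= m)%nat -> bpoly n f -> bpoly m f.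
Proof. induction 1; auto. intros; apply bpoly_S; auto. Qed.

Lemma bpoly_lin n f g l m : bpoly n f -> bpoly n g -> bpoly n (fun x y => l * f x y + m * g x y).
Proof.
  revert f g; induction n; intros f g Hf Hg.
  - destruct Hf as [c ->], Hg as [d ->]. exists (l * c + m * d); auto.
  - destruct Hf as (c & f1 & f2 & H1 & H2 & ->), Hg as (d & g1 & g2 & H3 & H4 & ->).
    exists (l * c + m * d), (fun x y => l * f1 x y + m * g1 x y),
      (fun x y => l * f2 x y + m * g2 x y).
    repeat split; auto. fext; ring.
Qed.

Lemma bpoly_plus n f g : bpoly n f -> bpoly n g -> bpoly n (fun x y => f x y + g x y).
Proof. intros. eapply bpoly_ext; [|apply (bpoly_lin n f g 1 1); auto]. intros; simpl; ring. Qed.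

Lemma bpoly_scal n f l : bpoly n f -> bpoly n (fun x y => l * f x y).
Proof. intros. eapply bpoly_ext; [|apply (bpoly_lin n f f l 0); auto]. intros; simpl; ring. Qed.

Lemma bpoly_mulx n f : bpoly n f -> bpoly (S n) (fun x y => x * f x y).
Proof. intros; exists 0, f, (fun _ _ => 0); repeat split; auto; [apply bpoly_const|fext; ring]. Qed.

Lemma bpoly_muly n f : bpoly n f -> bpoly (S n) (fun x y => y * f x y).
Proof. intros; exists 0, (fun _ _ => 0), f; repeat split; auto; [apply bpoly_const|fext; ring]. Qed.

Lemma bpoly_mul m n f g : bpoly m f -> bpoly n g -> bpoly (m + n) (fun x y => f x y * g x y).
Proof.
  revert f; induction m; intros f Hf Hg.
  - destruct Hf as [c ->]. apply bpoly_scal; auto.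
  - destruct Hf as (c & f1 & f2 & H1 & H2 & ->). rewrite Nat.add_succ_l.
    eapply bpoly_ext with (f := fun x y => (c * g x y + x * (f1 x y * g x y)) + y * (f2 x y * g x y));
      [intros; cbv beta; ring|].
    apply bpoly_plus; [apply bpoly_plus|apply bpoly_muly; auto].
    + apply bpoly_S, bpoly_le with n; [lia|apply bpoly_scal; auto].
    + apply bpoly_mulx; auto.
Qed.

Lemma bpoly_sum k (G : nat -> R -> R -> R) n : (forall i, (i < n)%nat -> bpoly k (G i)) ->
  bpoly k (fun x y => sumR (fun i => G i x y) n).
Proof.
  induction n; intros H; simpl; [apply bpoly_const|].
  apply (bpoly_plus k (fun x y => sumR (fun i => G i x y) n) (G n)); auto.
Qed.

Lemma bpoly_monomial m c a b : (a + b <= m)%nat -> bpoly m (fun x y => c * x ^ a * y ^ b).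
Proof.
  intros H. apply bpoly_le with (a + b)%nat; auto.
  eapply bpoly_ext with (f := fun x y => c * (x ^ a * y ^ b)); [intros; cbv beta; ring|].
  apply bpoly_scal, (bpoly_mul a b (fun x y => x ^ a) (fun x y => y ^ b)).
  - clear; induction a; [exists 1; auto|apply (bpoly_mulx a (fun x y => x ^ a)); auto].
  - clear; induction b; [exists 1; auto|apply (bpoly_muly b (fun x y => y ^ b)); auto].
Qed.

Lemma bpoly_line n f x0 y0 a b : bpoly n f -> upoly n (fun s => f (x0 + a * s) (y0 + b * s)).
Proof.
  revert f; induction n; intros f Hf.
  - destruct Hf as [c ->]. exists c; auto.
  - destruct Hf as (c & g & h & H1 & H2 & ->).
    pose proof (IHn g H1) as Hg. pose proof (IHn h H2) as Hh.
    pose (g' := fun s => g (x0 + a * s) (y0 + b * s)).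
    pose (h' := fun s => h (x0 + a * s) (y0 + b * s)).
    replace (fun s => c + (x0 + a * s) * g (x0 + a * s) (y0 + b * s)
                        + (y0 + b * s) * h (x0 + a * s) (y0 + b * s))
      with (fun s => (c + x0 * g' s + y0 * h' s) + s * (a * g' s + b * h' s))
      by (fext; unfold g', h'; ring).
    apply upoly_plus; [apply upoly_le with n; [lia|]|apply upoly_mulx, upoly_lin; auto].
    apply upoly_plus; [apply upoly_plus; [apply upoly_const|]|]; apply upoly_scal; auto.
Qed.

Lemma bpoly_line_x m F y : bpoly m F -> upoly m (fun t => F t y).
Proof.
  intros H. replace (fun t => F t y) with (fun s => F (0 + 1 * s) (y + 0 * s))
    by (fext; f_equal; ring). apply bpoly_line; auto.
Qed.

Lemma bpoly_line_y m F x : bpoly m F -> upoly m (fun t => F x t).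
Proof.
  intros H. replace (fun t => F x t) with (fun s => F (x + 0 * s) (0 + 1 * s))
    by (fext; f_equal; ring). apply bpoly_line; auto.
Qed.

Lemma bpoly_upoly_affine n p al be ga : upoly n p ->
  bpoly n (fun x y => p (al * x + be * y + ga)).
Proof.
  revert p; induction n; intros p Hp.
  - destruct Hp as [c ->]. exists c; auto.
  - destruct Hp as (c & p1 & H1 & ->). pose proof (IHn _ H1) as Hp1.
    set (q := fun x y => p1 (al * x + be * y + ga)) in *.
    eapply bpoly_ext with
      (f := fun x y => (c + ga * q x y) + x * (al * q x y) + y * (be * q x y));
      [intros; unfold q; ring|].
    apply bpoly_plus; [apply bpoly_plus|].
    + apply bpoly_S, bpoly_plus; [apply bpoly_const|apply bpoly_scal; auto].
    + apply bpoly_mulx, bpoly_scal; auto.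
    + apply bpoly_muly, bpoly_scal; auto.
Qed.

Lemma is_Pk_const k a : is_Pk k (fun _ _ => a).
Proof.
  exists (fun i j => match i, j with O, O => a | _, _ => 0 end). intros x y.
  rewrite sumR_recl, Nat.sub_0_r, sumR_recl, (sumR_eq0 _ k), (sumR_eq0 _ k); [simpl; ring|..];
    intros; try (apply sumR_eq0; intros); simpl; ring.
Qed.

Lemma is_Pk_plus k f g : is_Pk k f -> is_Pk k g -> is_Pk k (fun x y => f x y + g x y).
Proof.
  intros [c Hc] [d Hd]. exists (fun i j => c i j + d i j). intros x y. rewrite Hc, Hd.
  rewrite <- sumR_plus. apply sumR_ext; intros. rewrite <- sumR_plus. apply sumR_ext; intros. ring.
Qed.

Lemma is_Pk_mulx k f : is_Pk k f -> is_Pk (S k) (fun x y => x * f x y).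
Proof.
  intros [c Hc]. exists (fun i j => match i with O => 0 | S i' => c i' j end). intros x y.
  rewrite Hc, (sumR_recl _ (S k)), (sumR_eq0 _ (S (S k) - 0)) by (intros; simpl; ring).
  rewrite Rplus_0_l, <- sumR_scal. apply sumR_ext; intros i Hi.
  simpl (S (S k) - S i)%nat. rewrite <- sumR_scal. apply sumR_ext; intros. simpl; ring.
Qed.

Lemma is_Pk_muly k f : is_Pk k f -> is_Pk (S k) (fun x y => y * f x y).
Proof.
  intros [c Hc]. exists (fun i j => match j with O => 0 | S j' => c i j' end). intros x y.
  rewrite Hc. change (sumR ?g (S (S k))) with (sumR g (S k) + g (S k)). cbv beta.
  replace (S (S k) - S k)%nat with 1%nat by lia. simpl (sumR _ 1). rewrite <- sumR_scal.
  rewrite Rplus_0_l, Rmult_0_l, Rmult_0_l, Rplus_0_r.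
  apply sumR_ext; intros i Hi. replace (S (S k) - i)%nat with (S (S k - i)) by lia.
  rewrite sumR_recl, <- sumR_scal. simpl (match O with O => 0 | S j' => _ end).
  rewrite Rmult_0_l, Rmult_0_l, Rplus_0_l. apply sumR_ext; intros. simpl; ring.
Qed.

Lemma is_Pk_bpoly k f : is_Pk k f <-> bpoly k f.
Proof.
  split.
  - intros [c Hc]. eapply bpoly_ext; [intros; symmetry; apply Hc|].
    apply (bpoly_sum k (fun i x y => sumR (fun j => c i j * x ^ i * y ^ j) (S k - i))).
    intros i Hi. apply (bpoly_sum k (fun j x y => c i j * x ^ i * y ^ j)).
    intros j Hj. apply bpoly_monomial; lia.
  - revert f; induction k; intros f Hf.
    + destruct Hf as [c ->]. apply is_Pk_const.
    + destruct Hf as (c & g & h & Hg & Hh & ->).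
      apply (is_Pk_plus (S k) (fun x y => c + x * g x y) (fun x y => y * h x y));
        [apply (is_Pk_plus (S k) (fun _ _ => c) (fun x y => x * g x y)); [apply is_Pk_const|]|];
        [apply is_Pk_mulx|apply is_Pk_muly]; auto.
Qed.

Definition pdx (f : R -> R -> R) : R -> R -> R := fun x y => Derive (fun t => f t y) x.
Definition pdy (f : R -> R -> R) : R -> R -> R := fun x y => Derive (fun t => f x t) y.

(* Differentiability in the form needed here: the chain rule along every line. *)
Definition line_derivable (f : R -> R -> R) : Prop := forall x0 y0 a b s : R,
  is_derive (fun s : R => f (x0 + a * s) (y0 + b * s)) s
    (a * pdx f (x0 + a * s) (y0 + b * s) + b * pdy f (x0 + a * s) (y0 + b * s)).

Lemma line_derivable_pdx f : line_derivable f ->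
  forall x y : R, is_derive (fun t => f t y) x (pdx f x y).
Proof.
  intros H x y. pose proof (H 0 y 1 0 x) as D.
  replace (0 + 1 * x) with x in D by ring. replace (y + 0 * x) with y in D by ring.
  eapply is_derive_ext_eq; [| |exact D]; [intros; cbv beta; f_equal; ring|ring].
Qed.

Lemma line_derivable_pdy f : line_derivable f ->
  forall x y : R, is_derive (fun t => f x t) y (pdy f x y).
Proof.
  intros H x y. pose proof (H x 0 0 1 y) as D.
  replace (0 + 1 * y) with y in D by ring. replace (x + 0 * y) with x in D by ring.
  eapply is_derive_ext_eq; [| |exact D]; [intros; cbv beta; f_equal; ring|ring].
Qed.

Lemma pdx_unique f F : (forall x y : R, is_derive (fun t => f t y) x (F x y)) -> pdx f = F.
Proof. intros H; fext. apply is_derive_unique; auto. Qed.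

Lemma pdy_unique f F : (forall x y : R, is_derive (fun t => f x t) y (F x y)) -> pdy f = F.
Proof. intros H; fext. apply is_derive_unique; auto. Qed.

Lemma pdx_const c : pdx (fun _ _ => c) = fun _ _ => 0.
Proof. apply pdx_unique; intros; exact (is_derive_const c x). Qed.

Lemma pdy_const c : pdy (fun _ _ => c) = fun _ _ => 0.
Proof. apply pdy_unique; intros; exact (is_derive_const c y). Qed.

Lemma line_derivable_const c : line_derivable (fun _ _ => c).
Proof.
  intros x0 y0 a b s. rewrite pdx_const, pdy_const.
  eapply is_derive_ext_eq; [| |exact (is_derive_const c s)]; intros; R_ring.
Qed.

Lemma line_derivable_lin f g l m : line_derivable f -> line_derivable g ->
  pdx (fun x y => l * f x y + m * g x y) = (fun x y => l * pdx f x y + m * pdx g x y) /\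
  pdy (fun x y => l * f x y + m * g x y) = (fun x y => l * pdy f x y + m * pdy g x y) /\
  line_derivable (fun x y => l * f x y + m * g x y).
Proof.
  intros Hf Hg.
  assert (E1 : pdx (fun x y => l * f x y + m * g x y) = (fun x y => l * pdx f x y + m * pdx g x y)).
  { apply pdx_unique; intros x y.
    eapply is_derive_ext_eq; [| |exact (is_derive_Rplus _ _ x _ _
      (is_derive_scal _ x l _ (line_derivable_pdx f Hf x y))
      (is_derive_scal _ x m _ (line_derivable_pdx g Hg x y)))]; intros; R_ring. }
  assert (E2 : pdy (fun x y => l * f x y + m * g x y) = (fun x y => l * pdy f x y + m * pdy g x y)).
  { apply pdy_unique; intros x y.
    eapply is_derive_ext_eq; [| |exact (is_derive_Rplus _ _ y _ _
      (is_derive_scal _ y l _ (line_derivable_pdy f Hf x y))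
      (is_derive_scal _ y m _ (line_derivable_pdy g Hg x y)))]; intros; R_ring. }
  split; [|split]; auto. intros x0 y0 a b s. rewrite E1, E2.
  eapply is_derive_ext_eq; [| |exact (is_derive_Rplus _ _ s _ _
    (is_derive_scal _ s l _ (Hf x0 y0 a b s)) (is_derive_scal _ s m _ (Hg x0 y0 a b s)))];
    intros; R_ring.
Qed.

Lemma line_derivable_horner F G H : line_derivable F -> line_derivable G -> line_derivable H ->
  let f := fun x y => F x y + x * G x y + y * H x y in
  pdx f = (fun x y => pdx F x y + (G x y + x * pdx G x y) + y * pdx H x y) /\
  pdy f = (fun x y => pdy F x y + x * pdy G x y + (H x y + y * pdy H x y)) /\ line_derivable f.
Proof.
  intros HF HG HH f.
  assert (E1 : pdx f = (fun x y => pdx F x y + (G x y + x * pdx G x y) + y * pdx H x y)).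
  { apply pdx_unique; intros x y.
    eapply is_derive_ext_eq; [| |exact (is_derive_Rplus _ _ x _ _
      (is_derive_Rplus _ _ x _ _ (line_derivable_pdx F HF x y)
        (is_derive_Rmult (fun t => t) (fun t => G t y) x _ _ (is_derive_id x)
          (line_derivable_pdx G HG x y)))
      (is_derive_scal _ x y _ (line_derivable_pdx H HH x y)))]; intros; unfold f; R_ring. }
  assert (E2 : pdy f = (fun x y => pdy F x y + x * pdy G x y + (H x y + y * pdy H x y))).
  { apply pdy_unique; intros x y.
    eapply is_derive_ext_eq; [| |exact (is_derive_Rplus _ _ y _ _
      (is_derive_Rplus _ _ y _ _ (line_derivable_pdy F HF x y)
        (is_derive_scal _ y x _ (line_derivable_pdy G HG x y)))
      (is_derive_Rmult (fun t => t) (fun t => H x t) y _ _ (is_derive_id y)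
        (line_derivable_pdy H HH x y)))]; intros; unfold f; R_ring. }
  split; [|split]; auto. intros x0 y0 a b s. rewrite E1, E2. unfold f.
  eapply is_derive_ext_eq; [| |exact (is_derive_Rplus _ _ s _ _
    (is_derive_Rplus _ _ s _ _ (HF x0 y0 a b s)
      (is_derive_Rmult (fun s => x0 + a * s) (fun s => G (x0 + a * s) (y0 + b * s)) s _ _
        (is_derive_affine a x0 s) (HG x0 y0 a b s)))
    (is_derive_Rmult (fun s => y0 + b * s) (fun s => H (x0 + a * s) (y0 + b * s)) s _ _
      (is_derive_affine b y0 s) (HH x0 y0 a b s)))]; intros; R_ring.
Qed.

Lemma bpoly_pd n f : bpoly n f ->
  line_derivable f /\ bpoly (pred n) (pdx f) /\ bpoly (pred n) (pdy f).
Proof.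
  revert f; induction n; intros f Hf.
  - destruct Hf as [c ->]. rewrite pdx_const, pdy_const.
    split; [apply line_derivable_const|split; exists 0; reflexivity].
  - destruct Hf as (c & g & h & Hg & Hh & ->).
    destruct (IHn g Hg) as (Cg & Hgx & Hgy), (IHn h Hh) as (Ch & Hhx & Hhy).
    destruct (line_derivable_horner _ _ _ (line_derivable_const c) Cg Ch) as (E1 & E2 & C).
    cbv zeta in *. rewrite E1, E2, pdx_const, pdy_const. split; auto. simpl.
    destruct n as [|n].
    + destruct Hg as [cg ->], Hh as [ch ->]. rewrite !pdx_const, !pdy_const.
      split; [exists cg | exists ch]; fext; ring.
    + split.
      * replace (fun x y => 0 + (g x y + x * pdx g x y) + y * pdx h x y)
          with (fun x y => (g x y + x * pdx g x y) + y * pdx h x y) by (fext; ring).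
        apply bpoly_plus; [apply bpoly_plus; [|apply bpoly_mulx]|apply bpoly_muly]; auto.
      * replace (fun x y => 0 + x * pdy g x y + (h x y + y * pdy h x y))
          with (fun x y => (h x y + x * pdy g x y) + y * pdy h x y) by (fext; ring).
        apply bpoly_plus; [apply bpoly_plus; [|apply bpoly_mulx]|apply bpoly_muly]; auto.
Qed.

Lemma bpoly_line_derivable n f : bpoly n f -> line_derivable f.
Proof. intros H; apply (bpoly_pd n f H). Qed.

Lemma bpoly_pd_comm n f : bpoly n f -> pdx (pdy f) = pdy (pdx f).
Proof.
  revert f; induction n; intros f Hf.
  - destruct Hf as [c ->]. rewrite pdx_const, pdy_const, pdx_const, pdy_const. auto.
  - destruct Hf as (c & g & h & Hg & Hh & ->).
    destruct (bpoly_pd _ _ Hg) as (Cg & Hgx & Hgy), (bpoly_pd _ _ Hh) as (Ch & Hhx & Hhy).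
    destruct (line_derivable_horner _ _ _ (line_derivable_const c) Cg Ch) as (E1 & E2 & _).
    cbv zeta in *. rewrite E1, E2, pdx_const, pdy_const.
    replace (fun x y => 0 + (g x y + x * pdx g x y) + y * pdx h x y) with
      (fun x y => g x y + x * pdx g x y + y * pdx h x y) by (fext; ring).
    replace (fun x y => 0 + x * pdy g x y + (h x y + y * pdy h x y)) with
      (fun x y => h x y + x * pdy g x y + y * pdy h x y) by (fext; ring).
    destruct (line_derivable_horner _ _ _ Cg (bpoly_line_derivable _ _ Hgx)
      (bpoly_line_derivable _ _ Hhx)) as (_ & F2 & _).
    destruct (line_derivable_horner _ _ _ Ch (bpoly_line_derivable _ _ Hgy)
      (bpoly_line_derivable _ _ Hhy)) as (F1 & _ & _).
    cbv zeta in *. rewrite F1, F2, (IHn g Hg), (IHn h Hh). fext; ring.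
Qed.

Lemma bpoly_antiderivative_y k F : bpoly k F -> exists G, bpoly (S k) G /\
  (forall x, G x 0 = 0) /\ forall x y : R, is_derive (fun t => G x t) y (F x y).
Proof.
  intros HF. apply is_Pk_bpoly in HF. destruct HF as [c Hc].
  exists (fun x y => sumR (fun i => sumR (fun j =>
    c i j / INR (S j) * x ^ i * y ^ (S j)) (S k - i)) (S k)).
  split; [|split].
  - apply (bpoly_sum (S k)
      (fun i x y => sumR (fun j => c i j / INR (S j) * x ^ i * y ^ (S j)) (S k - i))).
    intros i Hi. apply (bpoly_sum (S k) (fun j x y => c i j / INR (S j) * x ^ i * y ^ (S j))).
    intros j Hj. apply bpoly_monomial; lia.
  - intros x. apply sumR_eq0; intros. apply sumR_eq0; intros. simpl; ring.
  - intros x y. rewrite Hc.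
    apply (is_derive_sumR
      (fun i t => sumR (fun j => c i j / INR (S j) * x ^ i * t ^ (S j)) (S k - i))).
    intros i Hi. apply (is_derive_sumR (fun j t => c i j / INR (S j) * x ^ i * t ^ (S j))).
    intros j Hj. eapply is_derive_ext_eq;
      [| |exact (is_derive_scal _ y (c i j / INR (S j) * x ^ i) _ (is_derive_pow_id (S j) y))];
      [intros; cbv beta; ring|]. simpl pred. field. apply not_0_INR; lia.
Qed.

(** * Polynomial vector fields and the [L2] product on the triangle *)

Definition vlin (l : R) (u : VF) (m : R) (v : VF) : VF :=
  mkVF (fun x y => l * c1 u x y + m * c1 v x y) (fun x y => l * c2 u x y + m * c2 v x y).

Definition vconst (a b : R) : VF := mkVF (fun _ _ => a) (fun _ _ => b).

Definition vdot (u v : VF) : R -> R -> R := fun x y => c1 u x y * c1 v x y + c2 u x y * c2 v x y.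

Definition vpoly (k : nat) (u : VF) : Prop := bpoly k (c1 u) /\ bpoly k (c2 u).

Lemma VF_ext u v : (forall x y, c1 u x y = c1 v x y) -> (forall x y, c2 u x y = c2 v x y) -> u = v.
Proof. destruct u, v; simpl; intros. f_equal; fext; auto. Qed.

Ltac VF_ring := apply VF_ext; intros; simpl; ring.

Lemma vadd_vlin u v : vadd u v = vlin 1 u 1 v.
Proof. VF_ring. Qed.

Lemma is_Pk2_vpoly k u : is_Pk2 k u <-> vpoly k u.
Proof. unfold is_Pk2, vpoly. rewrite !is_Pk_bpoly. tauto. Qed.

Lemma vpoly_lin k u v l m : vpoly k u -> vpoly k v -> vpoly k (vlin l u m v).
Proof. intros [] []; split; simpl; apply bpoly_lin; auto. Qed.

Lemma vpoly_const k a b : vpoly k (vconst a b).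
Proof. split; simpl; apply bpoly_const. Qed.

Lemma vpoly_vadd k u v : vpoly k u -> vpoly k v -> vpoly k (vadd u v).
Proof. intros; rewrite vadd_vlin; apply vpoly_lin; auto. Qed.

Lemma vpoly_vsum k F n : (forall i, (i < n)%nat -> vpoly k (F i)) -> vpoly k (vsum F n).
Proof. induction n; simpl; intros; [split; simpl; apply bpoly_const|apply vpoly_vadd; auto]. Qed.

Lemma vdot_bpoly k u v : vpoly k u -> vpoly k v -> bpoly (k + k) (vdot u v).
Proof.
  intros [] []. apply (bpoly_plus _ (fun x y => c1 u x y * c1 v x y) (fun x y => c2 u x y * c2 v x y));
    apply (bpoly_mul k k); auto.
Qed.

Lemma RInt_slice_upoly m F : bpoly m F -> upoly (S m) (fun x => RInt (fun y => F x y) 0 (1 - x)).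
Proof.
  intros HF. destruct (bpoly_antiderivative_y m F HF) as (G & HG & HG0 & HD).
  replace (fun x => RInt (fun y => F x y) 0 (1 - x)) with (fun s => G (0 + 1 * s) (1 + -1 * s)).
  - apply bpoly_line; auto.
  - fext. symmetry. apply is_RInt_unique.
    replace (G (0 + 1 * x) (1 + -1 * x)) with (minus (G x (1 - x)) (G x 0)).
    + apply (is_RInt_derive (fun t => G x t) (fun y => F x y)); intros; [apply HD|].
      eapply upoly_continuous, bpoly_line_y; eauto.
    + rewrite HG0. replace (0 + 1 * x) with x by ring. replace (1 + -1 * x) with (1 - x) by ring.
      unfold minus, plus, opp; simpl; ring.
Qed.

Lemma L2K_vdot u v : L2K u v = RInt (fun x => RInt (fun y => vdot u v x y) 0 (1 - x)) 0 1.
Proof. reflexivity. Qed.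

Lemma L2K_sym u v : L2K u v = L2K v u.
Proof. unfold L2K. f_equal. fext. f_equal. fext. ring. Qed.

Lemma L2K_lin k u v w l m : vpoly k u -> vpoly k v -> vpoly k w ->
  L2K (vlin l u m v) w = l * L2K u w + m * L2K v w.
Proof.
  intros Hu Hv Hw. rewrite !L2K_vdot.
  pose proof (vdot_bpoly k u w Hu Hw) as Q1. pose proof (vdot_bpoly k v w Hv Hw) as Q2.
  rewrite <- RInt_lin by (eapply ex_RInt_cont, upoly_continuous, RInt_slice_upoly; eauto).
  f_equal. fext. rewrite <- RInt_lin by (eapply ex_RInt_cont, upoly_continuous, bpoly_line_y; eauto).
  f_equal. fext. unfold vdot; simpl; ring.
Qed.

Lemma L2K_lin_r k u v w l m : vpoly k u -> vpoly k v -> vpoly k w ->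
  L2K w (vlin l u m v) = l * L2K w u + m * L2K w v.
Proof. intros. rewrite L2K_sym, (L2K_lin k), (L2K_sym u), (L2K_sym v); auto. Qed.

Lemma L2K_vzero u : L2K u vzero = 0.
Proof.
  unfold L2K; simpl. rewrite (RInt_ext _ (fun _ => 0)); [apply RInt_zero_fun|].
  intros x _. rewrite (RInt_ext _ (fun _ => 0)); [apply RInt_zero_fun|]. intros; R_ring.
Qed.

Lemma L2K_ge0 k u : vpoly k u -> 0 <= L2K u u.
Proof.
  intros Hu. pose proof (vdot_bpoly k u u Hu Hu) as Q1. rewrite L2K_vdot.
  apply RInt_ge_0; [lra|eapply ex_RInt_cont, upoly_continuous, RInt_slice_upoly; eauto|].
  intros x Hx. apply RInt_ge_0; [lra|eapply ex_RInt_cont, upoly_continuous, bpoly_line_y; eauto|].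
  intros; unfold vdot; nra.
Qed.

(* A degenerate Cauchy-Schwarz: otherwise [L2K (x + t r) (x + t r) < 0] for a suitable [t]. *)
Lemma L2K_self_eq0_orth k x r : vpoly k x -> vpoly k r -> L2K r r = 0 -> L2K x r = 0.
Proof.
  intros Hx Hr H0. destruct (Req_dec (L2K x r) 0); auto. exfalso.
  set (t := - (L2K x x + 1) / (2 * L2K x r)).
  pose proof (L2K_ge0 k (vlin 1 x t r) (vpoly_lin k x r 1 t Hx Hr)) as P.
  rewrite (L2K_lin k), !(L2K_lin_r k), (L2K_sym r x), H0 in P by (auto; apply vpoly_lin; auto).
  assert (E : t * L2K x r = - (L2K x x + 1) / 2) by (unfold t; field; auto).
  replace (1 * (1 * L2K x x + t * L2K x r) + t * (1 * L2K x r + t * 0))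
    with (L2K x x + 2 * (t * L2K x r)) in P by ring.
  rewrite E in P. lra.
Qed.

Lemma bpoly_zero_on_triangle m f : bpoly m f ->
  (forall x y, 0 <= x < 1 -> 0 <= y <= 1 - x -> f x y = 0) -> forall x y, f x y = 0.
Proof.
  intros Hf Hz x y.
  assert (Hx : forall x, 0 <= x <= 1/2 -> forall y, f x y = 0).
  { intros x' Hx'.
    apply (upoly_zero_on m (fun t => f x' t) 0 (1 - x')); [lra|apply bpoly_line_y; auto|].
    intros; apply Hz; lra. }
  apply (upoly_zero_on m (fun t => f t y) 0 (1/2)); [lra|apply bpoly_line_x; auto|]. intros; auto.
Qed.

Lemma L2K_eq0 k u : vpoly k u -> L2K u u = 0 -> forall x y, c1 u x y = 0 /\ c2 u x y = 0.
Proof.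
  intros Hu H0. pose proof (vdot_bpoly k u u Hu Hu) as Q1. rewrite L2K_vdot in H0.
  assert (Hslice : forall x, 0 <= x < 1 -> forall y, 0 <= y <= 1 - x -> vdot u u x y = 0).
  { intros x Hx.
    assert (Hout : RInt (fun y => vdot u u x y) 0 (1 - x) = 0).
    { apply (RInt_ge0_eq0 (fun x => RInt (fun y => vdot u u x y) 0 (1 - x)) 0 1); auto; try lra.
      - intros; eapply upoly_continuous, RInt_slice_upoly; eauto.
      - intros z Hz. apply RInt_ge_0; [lra|eapply ex_RInt_cont, upoly_continuous, bpoly_line_y; eauto|].
        intros; unfold vdot; nra. }
    apply (RInt_ge0_eq0 (fun y => vdot u u x y) 0 (1 - x)); auto; try lra.
    - intros; eapply upoly_continuous, bpoly_line_y; eauto.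
    - intros; unfold vdot; nra. }
  destruct Hu as [H1 H2]. intros x y; split;
    [apply (bpoly_zero_on_triangle k _ H1)|apply (bpoly_zero_on_triangle k _ H2)];
    intros x' y' Hx' Hy'; specialize (Hslice x' Hx' y' Hy'); unfold vdot in Hslice; nra.
Qed.

(** * Legendre polynomials *)

Lemma legendre_rec m x : legendre (S (S m)) x =
  ((2 * INR m + 3) * x * legendre (S m) x - (INR m + 1) * legendre m x) / (INR m + 2).
Proof.
  assert (E : forall n, legendre (S n) x = snd (legpair n x)).
  { intros n; unfold legendre; simpl. destruct (legpair n x); reflexivity. }
  rewrite !E. unfold legendre. simpl. destruct (legpair m x); reflexivity.
Qed.

Lemma legendre_lc n : exists a, a > 0 /\ upoly_lc n (legendre n) a.
Proof.
  enough (H : forall n, (exists a, a > 0 /\ upoly_lc n (legendre n) a) /\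
                        (exists a, a > 0 /\ upoly_lc (S n) (legendre (S n)) a)) by apply H.
  clear n; induction n as [|n [[a [Ha H1]] [b [Hb H2]]]].
  - split; exists 1; split; try lra; [reflexivity|].
    exists 0, (fun _ => 1). split; [reflexivity|]. fext. unfold legendre; simpl; ring.
  - split; [exists b; auto|]. pose proof (pos_INR n).
    exists ((2 * INR n + 3) / (INR n + 2) * b + (- (INR n + 1) / (INR n + 2)) * 0). split.
    + rewrite Rmult_0_r, Rplus_0_r. apply Rmult_lt_0_compat; auto. apply Rdiv_lt_0_compat; lra.
    + replace (legendre (S (S n))) with (fun x => (2 * INR n + 3) / (INR n + 2) * (x * legendre (S n) x)
        + (- (INR n + 1) / (INR n + 2)) * legendre n x) by (fext; rewrite legendre_rec; field; lra).
      apply upoly_lc_lin; [apply upoly_lc_mulx; auto|].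
      apply upoly_lc_S0, upoly_le with n; [lia|eapply upoly_lc_upoly; eauto].
Qed.

Lemma legendre_upoly n : upoly n (legendre n).
Proof. destruct (legendre_lc n) as [a [_ H]]. eapply upoly_lc_upoly; eauto. Qed.

Lemma legendre_continuous n x : continuous (legendre n) x.
Proof. eapply upoly_continuous, legendre_upoly. Qed.

Lemma legendre_at1 n : legendre n 1 = 1.
Proof.
  enough (H : forall n, legendre n 1 = 1 /\ legendre (S n) 1 = 1) by apply H.
  clear n; induction n as [|n [H1 H2]]; [split; reflexivity|]. split; auto.
  rewrite legendre_rec, H1, H2. pose proof (pos_INR n). field. lra.
Qed.

Definition dlegendre n x := Derive (legendre n) x.

Lemma is_derive_legendre n x : is_derive (legendre n) x (dlegendre n x).
Proof.
  destruct (upoly_is_derive n _ (legendre_upoly n)) as (p' & _ & Hp).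
  unfold dlegendre. rewrite (is_derive_unique _ _ _ (Hp x)); auto.
Qed.

Lemma dlegendre_upoly n : upoly (pred n) (dlegendre n).
Proof.
  destruct (upoly_is_derive n _ (legendre_upoly n)) as (p' & Hp' & Hp).
  replace (dlegendre n) with p'; auto. fext. symmetry; apply is_derive_unique; auto.
Qed.

Lemma dlegendre_continuous n x : continuous (dlegendre n) x.
Proof. eapply upoly_continuous, dlegendre_upoly. Qed.

Lemma dlegendre_rec m x : dlegendre (S (S m)) x =
  ((2 * INR m + 3) * (legendre (S m) x + x * dlegendre (S m) x)
   - (INR m + 1) * dlegendre m x) / (INR m + 2).
Proof.
  apply is_derive_unique. pose proof (pos_INR m).
  pose proof (is_derive_Rmult (fun t => t) (legendre (S m)) x _ _ (is_derive_id x)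
    (is_derive_legendre (S m) x)) as D1.
  pose proof (is_derive_Rminus _ _ x _ _ (is_derive_scal _ x (2 * INR m + 3) _ D1)
    (is_derive_scal _ x (INR m + 1) _ (is_derive_legendre m x))) as D2.
  eapply is_derive_ext_eq; [| |exact (is_derive_scal _ x (/ (INR m + 2)) _ D2)];
    intros; R_simpl; [rewrite legendre_rec|]; field; lra.
Qed.

Lemma legendre_deriv_identities m x :
  (x ^ 2 - 1) * dlegendre (S m) x = (INR m + 1) * (x * legendre (S m) x - legendre m x) /\
  x * dlegendre (S m) x - dlegendre m x = (INR m + 1) * legendre (S m) x.
Proof.
  induction m as [|m [h1 h2]].
  - replace (dlegendre 1 x) with 1 by (symmetry; apply is_derive_unique; exact (is_derive_id x)).
    replace (dlegendre 0 x) with 0 by (symmetry; apply is_derive_unique; exact (is_derive_const 1 x)).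
    unfold legendre; simpl; split; ring.
  - rewrite S_INR. pose proof (pos_INR m).
    assert (HD : dlegendre (S (S m)) x = (INR m + 2) * legendre (S m) x + x * dlegendre (S m) x).
    { rewrite dlegendre_rec.
      replace (dlegendre m x) with (x * dlegendre (S m) x - (INR m + 1) * legendre (S m) x) by lra.
      field. lra. }
    rewrite HD, legendre_rec. split.
    + replace ((x ^ 2 - 1) * ((INR m + 2) * legendre (S m) x + x * dlegendre (S m) x)) with
        ((x ^ 2 - 1) * (INR m + 2) * legendre (S m) x + x * ((x ^ 2 - 1) * dlegendre (S m) x))
        by ring.
      rewrite h1. field. lra.
    + replace (x * ((INR m + 2) * legendre (S m) x + x * dlegendre (S m) x) - dlegendre (S m) x)
        with ((INR m + 2) * x * legendre (S m) x + (x ^ 2 - 1) * dlegendre (S m) x) by ring.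
      rewrite h1. field. lra.
Qed.

Lemma legendre_ode n x : is_derive (fun t => (1 - t ^ 2) * dlegendre n t) x
  (- (INR n * (INR n + 1)) * legendre n x).
Proof.
  destruct n as [|n].
  - eapply is_derive_ext_eq; [| |exact (is_derive_const 0 x)]; [|R_ring].
    intros t. replace (dlegendre 0 t) with 0
      by (symmetry; apply is_derive_unique; exact (is_derive_const 1 t)).
    ring.
  - pose proof (is_derive_scal _ x (INR n + 1) _ (is_derive_Rminus _ _ x _ _ (is_derive_legendre n x)
      (is_derive_Rmult _ _ x _ _ (is_derive_id x) (is_derive_legendre (S n) x)))) as D.
    eapply is_derive_ext_eq; [| |exact D].
    + intros t. destruct (legendre_deriv_identities n t) as [h1 _]. cbv beta.
      replace ((1 - t ^ 2) * dlegendre (S n) t) with (- ((t ^ 2 - 1) * dlegendre (S n) t)) by ring.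
      rewrite h1. ring.
    + destruct (legendre_deriv_identities n x) as [_ h2]. rewrite S_INR. change one with 1.
      replace (dlegendre n x - (1 * legendre (S n) x + x * dlegendre (S n) x))
        with (- (x * dlegendre (S n) x - dlegendre n x) - legendre (S n) x) by ring.
      rewrite h2. ring.
Qed.

Lemma continuous_legendre_weight x : continuous (fun t => 1 - t ^ 2) x.
Proof. apply (ex_derive_continuous (fun t => 1 - t ^ 2)). auto_derive. auto. Qed.

(* Integrating [((1 - x^2) P_n')' P_m] by parts: the boundary terms vanish at [x = ±1]. *)
Lemma legendre_weak_ode n m :
  RInt (fun x => - (INR n * (INR n + 1)) * (legendre n x * legendre m x)
                 + 1 * ((1 - x ^ 2) * dlegendre n x * dlegendre m x)) (-1) 1 = 0.
Proof.
  apply is_RInt_unique.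
  replace 0 with (minus ((1 - 1 ^ 2) * dlegendre n 1 * legendre m 1)
                        ((1 - (-1) ^ 2) * dlegendre n (-1) * legendre m (-1)))
    by (unfold minus, plus, opp; simpl; ring).
  apply (is_RInt_derive (fun t => (1 - t ^ 2) * dlegendre n t * legendre m t)); intros x _.
  - eapply is_derive_ext_eq; [| |exact (is_derive_Rmult _ _ x _ _ (legendre_ode n x)
      (is_derive_legendre m x))]; intros; R_ring.
  - apply continuous_Rlin; repeat apply continuous_Rmult;
      auto using legendre_continuous, dlegendre_continuous, continuous_legendre_weight.
Qed.

Lemma legendre_orth n m : n <> m -> RInt (fun x => legendre n x * legendre m x) (-1) 1 = 0.
Proof.
  intros Hnm.
  assert (Ex1 : forall n m, ex_RInt (fun x => legendre n x * legendre m x) (-1) 1)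
    by (intros; apply ex_RInt_cont; intros; apply continuous_Rmult; apply legendre_continuous).
  assert (Ex2 : forall n m, ex_RInt (fun x => (1 - x ^ 2) * dlegendre n x * dlegendre m x) (-1) 1).
  { intros; apply ex_RInt_cont; intros; repeat apply continuous_Rmult;
      auto using dlegendre_continuous, continuous_legendre_weight. }
  pose proof (legendre_weak_ode n m) as K1. pose proof (legendre_weak_ode m n) as K2.
  rewrite RInt_lin in K1, K2 by auto.
  replace (RInt (fun x => (1 - x ^ 2) * dlegendre m x * dlegendre n x) (-1) 1)
    with (RInt (fun x => (1 - x ^ 2) * dlegendre n x * dlegendre m x) (-1) 1) in K2
    by (f_equal; fext; ring).
  replace (RInt (fun x => legendre m x * legendre n x) (-1) 1)
    with (RInt (fun x => legendre n x * legendre m x) (-1) 1) in K2 by (f_equal; fext; ring).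
  assert (INR n * (INR n + 1) <> INR m * (INR m + 1)).
  { intros E. apply Hnm. pose proof (pos_INR n); pose proof (pos_INR m).
    destruct (Nat.lt_trichotomy n m) as [L|[L|L]]; auto; apply lt_INR in L; nra. }
  apply (Rmult_eq_reg_l (INR n * (INR n + 1) - INR m * (INR m + 1))); lra.
Qed.

(** * Legendre polynomials on the edges *)

Lemma sqrt2_pos : 0 < sqrt 2.
Proof. apply sqrt_lt_R0; lra. Qed.

Lemma elen_pos f : 0 < elen f.
Proof. destruct f; simpl; try lra; apply sqrt2_pos. Qed.

Lemma leg_edge_affine f i : leg_edge f i = fun s => legendre i (2 / elen f * s + -1).
Proof. fext. unfold leg_edge. f_equal. pose proof (elen_pos f). field. lra. Qed.

Lemma leg_edge0 g s : leg_edge g 0 s = 1.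
Proof. reflexivity. Qed.

Lemma leg_edge_lc f i : exists a, a <> 0 /\ upoly_lc i (leg_edge f i) a.
Proof.
  destruct (legendre_lc i) as [a [Ha H]]. pose proof (elen_pos f).
  exists (a * (2 / elen f) ^ i). split.
  - apply Rmult_integral_contrapositive; split; [lra|].
    apply pow_nonzero, Rgt_not_eq, Rdiv_lt_0_compat; lra.
  - rewrite leg_edge_affine. apply upoly_lc_affine; auto.
Qed.

Lemma leg_edge_upoly f i : upoly i (leg_edge f i).
Proof. destruct (leg_edge_lc f i) as (a & _ & H). eapply upoly_lc_upoly; eauto. Qed.

Lemma leg_edge_continuous f i s : continuous (leg_edge f i) s.
Proof. eapply upoly_continuous, leg_edge_upoly. Qed.

Definition edge_moment (g : edge) (j : nat) (p : R -> R) : R :=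
  RInt (fun s => p s * leg_edge g j s) 0 (elen g).

Definition leg_norm (f : edge) (i : nat) : R := RInt (fun t => (leg_edge f i t) ^ 2) 0 (elen f).

Lemma leg_norm_pos f i : 0 < leg_norm f i.
Proof.
  pose proof (elen_pos f) as HL. unfold leg_norm.
  assert (Hc : forall t, continuous (fun t => leg_edge f i t ^ 2) t).
  { intros t. apply (continuous_ext (fun t => leg_edge f i t * leg_edge f i t)); [intros; R_ring|].
    apply continuous_Rmult; apply leg_edge_continuous. }
  destruct (Rle_lt_or_eq_dec 0 (RInt (fun t => leg_edge f i t ^ 2) 0 (elen f))) as [|E]; auto.
  - apply RInt_ge_0; [lra|apply ex_RInt_cont; auto|intros; apply pow2_ge_0].
  - exfalso. assert (Z : leg_edge f i (elen f) ^ 2 = 0).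
    { apply (RInt_ge0_eq0 (fun t => leg_edge f i t ^ 2) 0 (elen f)); auto; try lra.
      intros; apply pow2_ge_0. }
    unfold leg_edge in Z. replace (2 * elen f / elen f - 1) with 1 in Z by (field; lra).
    rewrite legendre_at1 in Z. lra.
Qed.

Lemma edge_moment_leg_edge g i j :
  edge_moment g j (leg_edge g i) = if Nat.eqb i j then leg_norm g j else 0.
Proof.
  pose proof (elen_pos g) as HL. unfold edge_moment. destruct (Nat.eqb_spec i j) as [->|Hij].
  - unfold leg_norm. f_equal. fext. ring.
  - pose proof (RInt_comp_lin (fun x => legendre i x * legendre j x) (2 / elen g) (-1) 0 (elen g)
      (ex_RInt_cont _ _ _ (fun x => continuous_Rmult _ _ x (legendre_continuous i x)
        (legendre_continuous j x)))) as E.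
    replace (2 / elen g * 0 + -1) with (-1) in E by ring.
    replace (2 / elen g * elen g + -1) with 1 in E by (field; lra).
    rewrite legendre_orth in E by auto.
    rewrite (RInt_ext _ (fun s => 2 / elen g * (leg_edge g i s * leg_edge g j s))) in E.
    + rewrite RInt_Rmult_l in E;
        [|apply ex_RInt_cont; intros; apply continuous_Rmult; apply leg_edge_continuous].
      apply Rmult_integral in E. destruct E as [E|E]; auto.
      exfalso. assert (0 < 2 / elen g) by (apply Rdiv_lt_0_compat; lra). lra.
    + intros x _. rewrite !leg_edge_affine. reflexivity.
Qed.

Lemma edge_moment_ext g j p q : (forall s, 0 <= s <= elen g -> p s = q s) ->
  edge_moment g j p = edge_moment g j q.
Proof.
  intros H. unfold edge_moment. apply RInt_ext. intros x Hx. pose proof (elen_pos g).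
  rewrite Rmin_left, Rmax_right in Hx by lra. rewrite H by lra. auto.
Qed.

Lemma edge_moment_lin g j p q l m : (forall s, continuous p s) -> (forall s, continuous q s) ->
  edge_moment g j (fun s => l * p s + m * q s) = l * edge_moment g j p + m * edge_moment g j q.
Proof.
  intros Hp Hq. unfold edge_moment. rewrite <- RInt_lin.
  - f_equal; fext; ring.
  - apply ex_RInt_cont; intros; apply continuous_Rmult; auto; apply leg_edge_continuous.
  - apply ex_RInt_cont; intros; apply continuous_Rmult; auto; apply leg_edge_continuous.
Qed.

Lemma edge_moment_plus g j p q : (forall s, continuous p s) -> (forall s, continuous q s) ->
  edge_moment g j (fun s => p s + q s) = edge_moment g j p + edge_moment g j q.
Proof.
  intros Hp Hq. rewrite <- (Rmult_1_l (edge_moment g j p)), <- (Rmult_1_l (edge_moment g j q)).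
  rewrite <- edge_moment_lin by auto. f_equal; fext; ring.
Qed.

Lemma edge_moment_scal g j c p : (forall s, continuous p s) ->
  edge_moment g j (fun s => c * p s) = c * edge_moment g j p.
Proof.
  intros Hp. unfold edge_moment. rewrite <- RInt_Rmult_l.
  - f_equal; fext; ring.
  - apply ex_RInt_cont; intros; apply continuous_Rmult; auto; apply leg_edge_continuous.
Qed.

Lemma edge_moment_sumR g j (F : nat -> R -> R) n :
  (forall i s, (i < n)%nat -> continuous (F i) s) ->
  edge_moment g j (fun s => sumR (fun i => F i s) n) = sumR (fun i => edge_moment g j (F i)) n.
Proof.
  induction n; intros H; simpl.
  - unfold edge_moment. rewrite (RInt_ext _ (fun _ => 0)); [apply RInt_zero_fun|intros; R_ring].
  - rewrite <- IHn by (intros; apply H; lia).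
    replace (fun s => sumR (fun i => F i s) n + F n s)
      with (fun s => 1 * sumR (fun i => F i s) n + 1 * F n s) by (fext; ring).
    rewrite edge_moment_lin; [ring| |intros; apply H; lia].
    intros; apply continuous_sumR; intros; apply H; lia.
Qed.

Lemma edge_moment0 g p : edge_moment g 0 p = RInt p 0 (elen g).
Proof. unfold edge_moment. f_equal. fext. rewrite leg_edge0. ring. Qed.

Lemma leg_norm0 g : leg_norm g 0 = elen g.
Proof.
  pose proof (edge_moment_leg_edge g 0 0) as E. simpl in E.
  rewrite <- E, edge_moment0. unfold leg_edge.
  rewrite (RInt_ext _ (fun _ => 1)), RInt_const; [R_ring|intros; reflexivity].
Qed.

Lemma edge_moment_const g j c : edge_moment g j (fun _ => c) = if Nat.eqb j 0 then c * elen g else 0.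
Proof.
  replace (fun _ : R => c) with (fun s => c * leg_edge g 0 s) by (fext; rewrite leg_edge0; ring).
  rewrite edge_moment_scal, edge_moment_leg_edge by apply leg_edge_continuous.
  destruct (Nat.eqb_spec 0 j) as [<-|]; simpl; [rewrite leg_norm0; ring|].
  destruct j; [lia|simpl; ring].
Qed.

Lemma edge_legendre_expansion g k p : upoly k p ->
  forall s, p s = sumR (fun j => edge_moment g j p / leg_norm g j * leg_edge g j s) (S k).
Proof.
  intros Hp. destruct (upoly_span_triangular k p (leg_edge g)) as [a Ha]; auto.
  { intros j _; apply leg_edge_lc. }
  assert (Hm : forall j, (j <= k)%nat -> edge_moment g j p = a j * leg_norm g j).
  { intros j Hj. replace p with (fun s => sumR (fun i => a i * leg_edge g i s) (S k)) by (fext; auto).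
    rewrite edge_moment_sumR by (intros; apply continuous_Rmult;
      [apply continuous_const|apply leg_edge_continuous]).
    rewrite (sumR_single _ j) by (lia || (intros i _ Hij;
      rewrite edge_moment_scal, edge_moment_leg_edge by apply leg_edge_continuous;
      destruct (Nat.eqb_spec i j); [lia|ring])).
    rewrite edge_moment_scal, edge_moment_leg_edge, Nat.eqb_refl by apply leg_edge_continuous.
    reflexivity. }
  intros s. rewrite Ha. apply sumR_ext. intros j Hj. rewrite Hm by lia.
  pose proof (leg_norm_pos g j). field. lra.
Qed.

Lemma edge_moments_eq0 g k p : upoly k p ->
  (forall j, (j <= k)%nat -> edge_moment g j p = 0) -> forall s, p s = 0.
Proof.
  intros Hp H s. rewrite (edge_legendre_expansion g k p Hp).
  apply sumR_eq0. intros j Hj. rewrite H by lia. unfold Rdiv. ring.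
Qed.

(** * Normal traces on the boundary *)

Definition etx (f : edge) : R := match f with Ebot => 1 | Ehyp => - / sqrt 2 | Eleft => 0 end.
Definition ety (f : edge) : R := match f with Ebot => 0 | Ehyp => / sqrt 2 | Eleft => -1 end.

Lemma epx_affine f s : epx f s = epx f 0 + etx f * s.
Proof. destruct f; simpl; unfold Rdiv; ring. Qed.

Lemma epy_affine f s : epy f s = epy f 0 + ety f * s.
Proof. destruct f; simpl; unfold Rdiv; ring. Qed.

(* The outward normal is the unit tangent [(etx, ety)] turned clockwise. *)
Lemma ntrace_tangent u f s : ntrace u f s =
  c1 u (epx f 0 + etx f * s) (epy f 0 + ety f * s) * ety f
  - c2 u (epx f 0 + etx f * s) (epy f 0 + ety f * s) * etx f.
Proof. unfold ntrace. rewrite <- epx_affine, <- epy_affine. destruct f; simpl; ring. Qed.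

Lemma ntrace_upoly k u f : vpoly k u -> upoly k (ntrace u f).
Proof.
  intros [H1 H2].
  replace (ntrace u f) with (fun s => ety f * c1 u (epx f 0 + etx f * s) (epy f 0 + ety f * s)
    + (- etx f) * c2 u (epx f 0 + etx f * s) (epy f 0 + ety f * s))
    by (fext; rewrite ntrace_tangent; ring).
  apply upoly_lin; apply bpoly_line; auto.
Qed.

Lemma ntrace_continuous k u f s : vpoly k u -> continuous (ntrace u f) s.
Proof. intros; eapply upoly_continuous, ntrace_upoly; eauto. Qed.

Lemma ntrace_vlin u v l m f s : ntrace (vlin l u m v) f s = l * ntrace u f s + m * ntrace v f s.
Proof. unfold ntrace; simpl; ring. Qed.

Lemma ntrace_vadd u v f s : ntrace (vadd u v) f s = ntrace u f s + ntrace v f s.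
Proof. unfold ntrace; simpl; ring. Qed.

Lemma ntrace_vsum F n f s : ntrace (vsum F n) f s = sumR (fun i => ntrace (F i) f s) n.
Proof. induction n; simpl; [unfold ntrace; simpl; ring|rewrite ntrace_vadd, IHn; auto]. Qed.

Lemma ntrace_veq u v : veq u v -> forall g s, ntrace u g s = ntrace v g s.
Proof. intros H g s. unfold ntrace. destruct (H (epx g s) (epy g s)) as [-> ->]; auto. Qed.

Definition curl (psi : R -> R -> R) : VF := mkVF (pdy psi) (fun x y => - pdx psi x y).

Lemma ntrace_curl psi : line_derivable psi ->
  forall f s, is_derive (fun s => psi (epx f s) (epy f s)) s (ntrace (curl psi) f s).
Proof.
  intros H f s. eapply is_derive_ext_eq; [| |exact (H (epx f 0) (epy f 0) (etx f) (ety f) s)].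
  - intros; cbv beta; rewrite <- epx_affine, <- epy_affine; reflexivity.
  - rewrite ntrace_tangent. simpl. ring.
Qed.

Lemma L2B_scrL k v g j : vpoly k v ->
  L2B (ntrace v) (scrL g j) = edge_moment g j (ntrace v g) / sqrt (leg_norm g j).
Proof.
  intros Hv.
  assert (E : RInt (fun s => ntrace v g s * scrL g j g s) 0 (elen g)
              = edge_moment g j (ntrace v g) / sqrt (leg_norm g j)).
  { unfold scrL, edge_moment. replace (edge_eqb g g) with true by (destruct g; reflexivity).
    unfold Rdiv. rewrite Rmult_comm, <- RInt_Rmult_l.
    - f_equal. fext. fold (leg_norm g j). field.
      apply Rgt_not_eq, sqrt_lt_R0, leg_norm_pos.
    - apply ex_RInt_cont; intros; apply continuous_Rmult;
        [eapply ntrace_continuous; eauto|apply leg_edge_continuous]. }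
  unfold L2B, edges; simpl. rewrite <- E.
  destruct g; unfold scrL; simpl;
    rewrite ?(RInt_ext (fun s => _ * 0) (fun _ => 0)), ?RInt_zero_fun by (intros; R_ring); ring.
Qed.

Lemma L2B_scrL_eq0 k v g j : vpoly k v ->
  L2B (ntrace v) (scrL g j) = 0 <-> edge_moment g j (ntrace v g) = 0.
Proof.
  intros H. rewrite (L2B_scrL k) by auto. pose proof (sqrt_lt_R0 _ (leg_norm_pos g j)).
  split; intros E; [|rewrite E; unfold Rdiv; ring].
  unfold Rdiv in E. apply Rmult_integral in E. destruct E as [E|E]; auto.
  exfalso. apply (Rinv_neq_0_compat (sqrt (leg_norm g j))); lra.
Qed.

(** * Stream functions and the boundary flux *)

(* With [G = ∫_0^y u1] and [K' = u2(., 0)], [psi = G - K] works: [div u = 0] forces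
   [∂x G (x, y) = u2 (x, 0) - u2 (x, y)]. *)
Lemma div_free_stream k u : vpoly k u -> div_free u ->
  exists psi, bpoly (S k) psi /\ veq (curl psi) u.
Proof.
  intros [H1 H2] Hdiv.
  destruct (bpoly_antiderivative_y k (c1 u) H1) as (G & HG & HG0 & DG).
  assert (Hu20 : bpoly k (fun _ y => c2 u y 0)).
  { eapply bpoly_ext; [|apply (bpoly_upoly_affine k (fun t => c2 u t 0) 0 1 0), bpoly_line_x; auto].
    intros; cbv beta; f_equal; ring. }
  destruct (bpoly_antiderivative_y k _ Hu20) as (K & HK & _ & DK).
  set (Kx := fun x (_ : R) => K 0 x).
  assert (HKx : bpoly (S k) Kx).
  { eapply bpoly_ext; [|apply (bpoly_upoly_affine (S k) (fun t => K 0 t) 1 0 0), bpoly_line_y; auto].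
    intros; unfold Kx; cbv beta; f_equal; ring. }
  exists (fun x y => 1 * G x y + (-1) * Kx x y). split; [apply bpoly_lin; auto|].
  destruct (bpoly_pd _ _ HG) as (LG & HGx & _).
  assert (EGy : pdy G = c1 u) by (apply pdy_unique; auto).
  assert (EGx : forall x y, pdx G x y = c2 u x 0 - c2 u x y).
  { intros x y.
    assert (Hd : forall t, is_derive (fun t => pdx G x t + c2 u x t) t 0).
    { intros t. pose proof (bpoly_pd_comm _ _ HG) as Hc. rewrite EGy in Hc.
      eapply is_derive_ext_eq; [| |exact (is_derive_Rplus _ _ t _ _
        (line_derivable_pdy _ (bpoly_line_derivable _ _ HGx) x t)
        (line_derivable_pdy _ (bpoly_line_derivable _ _ H2) x t))]; [reflexivity|].
      rewrite <- Hc. apply (Hdiv x t). }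
    pose proof (is_derive_0_const _ 0 y Hd) as E. cbv beta in E.
    replace (pdx G x 0) with 0 in E; [lra|].
    unfold pdx. rewrite (Derive_ext _ (fun _ => 0)), Derive_const; auto. }
  assert (EKx : pdx Kx = fun x _ => c2 u x 0).
  { apply pdx_unique; intros x y. unfold Kx. apply DK. }
  assert (EKy : pdy Kx = fun _ _ => 0).
  { apply pdy_unique; intros x y. unfold Kx. exact (is_derive_const (K 0 x) y). }
  destruct (line_derivable_lin G Kx 1 (-1) LG (bpoly_line_derivable _ _ HKx)) as (Ex & Ey & _).
  intros x y. unfold curl; simpl. rewrite Ex, Ey, EGy, EGx, EKx, EKy. split; ring.
Qed.

Lemma RInt_ntrace_stream k u psi g : vpoly k u -> line_derivable psi -> veq (curl psi) u ->
  RInt (ntrace u g) 0 (elen g) = psi (epx g (elen g)) (epy g (elen g)) - psi (epx g 0) (epy g 0).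
Proof.
  intros Hu Hpsi Hcurl. apply is_RInt_unique.
  apply (is_RInt_derive (fun s => psi (epx g s) (epy g s))); intros s _.
  - rewrite <- (ntrace_veq _ _ Hcurl). apply ntrace_curl; auto.
  - eapply ntrace_continuous; eauto.
Qed.

(* The three edges run [(0,0) -> (1,0) -> (0,1) -> (0,0)], so the potential differences cancel. *)
Lemma boundary_flux_eq0 k u : vpoly k u -> div_free u ->
  RInt (ntrace u Ebot) 0 (elen Ebot) + RInt (ntrace u Ehyp) 0 (elen Ehyp)
  + RInt (ntrace u Eleft) 0 (elen Eleft) = 0.
Proof.
  intros Hu Hdiv. destruct (div_free_stream k u Hu Hdiv) as (psi & Hpsi & Hcurl).
  rewrite !(RInt_ntrace_stream k u psi) by (auto; eapply bpoly_line_derivable; eauto).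
  simpl. pose proof sqrt2_pos.
  replace (sqrt 2 / sqrt 2) with 1 by (field; lra). replace (0 / sqrt 2) with 0 by (field; lra).
  replace (1 - 1) with 0 by ring. replace (1 - 0) with 1 by ring. ring.
Qed.

(** * Orthogonal projection onto [Phi_k] *)

Lemma divg_vlin k u v l m : vpoly k u -> vpoly k v ->
  forall x y, divg (vlin l u m v) x y = l * divg u x y + m * divg v x y.
Proof.
  intros [Hu1 Hu2] [Hv1 Hv2] x y. unfold divg. simpl.
  destruct (line_derivable_lin _ _ l m (bpoly_line_derivable _ _ Hu1)
    (bpoly_line_derivable _ _ Hv1)) as [E1 _].
  destruct (line_derivable_lin _ _ l m (bpoly_line_derivable _ _ Hu2)
    (bpoly_line_derivable _ _ Hv2)) as [_ [E2 _]].
  change (pdx (fun x y => l * c1 u x y + m * c1 v x y) x y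
          + pdy (fun x y => l * c2 u x y + m * c2 v x y) x y
          = l * (pdx (c1 u) x y + pdy (c2 u) x y) + m * (pdx (c1 v) x y + pdy (c2 v) x y)).
  rewrite E1, E2. ring.
Qed.

Lemma div_free_vlin k u v l m : vpoly k u -> vpoly k v -> div_free u -> div_free v ->
  div_free (vlin l u m v).
Proof. intros Hu Hv Du Dv x y. rewrite (divg_vlin k), Du, Dv by auto. ring. Qed.

Lemma div_free_vconst a b : div_free (vconst a b).
Proof. intros x y. unfold divg. simpl. rewrite !Derive_const. ring. Qed.

Lemma div_free_vsum k F n : (forall i, (i < n)%nat -> vpoly k (F i) /\ div_free (F i)) ->
  div_free (vsum F n).
Proof.
  induction n; simpl; intros H; [apply (div_free_vconst 0 0)|]. rewrite vadd_vlin.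
  apply (div_free_vlin k); [apply vpoly_vsum; intros; apply H; lia|apply H; lia|
    apply IHn; intros; apply H; lia|apply H; lia].
Qed.

Lemma in_Phi_vpoly k w : in_Phi k w -> vpoly k w.
Proof. intros [H _]. apply is_Pk2_vpoly; auto. Qed.

Lemma in_Phi_vzero k : in_Phi k vzero.
Proof.
  split; [apply is_Pk2_vpoly, (vpoly_const k 0 0)|split; [apply (div_free_vconst 0 0)|]].
  intros; unfold ntrace; simpl; ring.
Qed.

Lemma in_Phi_vlin k u v l m : in_Phi k u -> in_Phi k v -> in_Phi k (vlin l u m v).
Proof.
  intros Hu Hv. pose proof (in_Phi_vpoly _ _ Hu). pose proof (in_Phi_vpoly _ _ Hv).
  destruct Hu as (_ & Du & Tu), Hv as (_ & Dv & Tv).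
  split; [apply is_Pk2_vpoly, vpoly_lin; auto|split; [apply (div_free_vlin k); auto|]].
  intros f s Hs. rewrite ntrace_vlin, Tu, Tv; auto; ring.
Qed.

Fixpoint in_span (es : list VF) (w : VF) : Prop :=
  match es with
  | nil => w = vzero
  | e :: es' => exists a s, in_span es' s /\ w = vlin a e 1 s
  end.

Lemma in_span_vzero es : in_span es vzero.
Proof. induction es; simpl; auto. exists 0, vzero; split; auto. VF_ring. Qed.

Lemma in_span_vlin es u v l m : in_span es u -> in_span es v -> in_span es (vlin l u m v).
Proof.
  revert u v; induction es; simpl; intros u v Hu Hv.
  - subst. VF_ring.
  - destruct Hu as (a1 & s1 & H1 & ->), Hv as (a2 & s2 & H2 & ->).
    exists (l * a1 + m * a2), (vlin l s1 m s2); split; auto. VF_ring.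
Qed.

Lemma in_span_In es e : In e es -> in_span es e.
Proof.
  induction es; simpl; intros H; [destruct H|].
  destruct H as [->|H]; [exists 1, vzero; split; [apply in_span_vzero|destruct e; VF_ring]|].
  exists 0, e; split; auto. VF_ring.
Qed.

Definition vmonomials (k : nat) : list VF :=
  flat_map (fun i => flat_map (fun j =>
    mkVF (fun x y => x ^ i * y ^ j) (fun _ _ => 0) :: mkVF (fun _ _ => 0) (fun x y => x ^ i * y ^ j)
    :: nil) (seq 0 (S k))) (seq 0 (S k)).

Lemma vpoly_in_span k w : vpoly k w -> in_span (vmonomials k) w.
Proof.
  intros Hw. apply is_Pk2_vpoly in Hw. destruct Hw as [[c Hc] [d Hd]].
  assert (Hsum : forall (F G : nat -> R -> R -> R) n,
    (forall i, (i < n)%nat -> in_span (vmonomials k) (mkVF (F i) (G i))) ->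
    in_span (vmonomials k) (mkVF (fun x y => sumR (fun i => F i x y) n)
                                 (fun x y => sumR (fun i => G i x y) n))).
  { intros F G n H. induction n; [apply in_span_vzero|].
    replace (mkVF _ _) with (vlin 1 (mkVF (fun x y => sumR (fun i => F i x y) n)
      (fun x y => sumR (fun i => G i x y) n)) 1 (mkVF (F n) (G n))) by VF_ring.
    apply in_span_vlin; auto. }
  replace w with (mkVF
    (fun x y => sumR (fun i => sumR (fun j => c i j * x ^ i * y ^ j + 0) (S k - i)) (S k))
    (fun x y => sumR (fun i => sumR (fun j => 0 + d i j * x ^ i * y ^ j) (S k - i)) (S k))).
  - apply Hsum. intros i Hi. apply Hsum. intros j Hj.
    replace (mkVF _ _) with (vlin (c i j) (mkVF (fun x y => x ^ i * y ^ j) (fun _ _ => 0))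
      (d i j) (mkVF (fun _ _ => 0) (fun x y => x ^ i * y ^ j))) by VF_ring.
    apply in_span_vlin; apply in_span_In; unfold vmonomials; apply in_flat_map;
      exists i; (split; [apply in_seq; lia|]); apply in_flat_map;
      exists j; (split; [apply in_seq; lia|]); simpl; auto.
  - apply VF_ext; intros; cbn [c1 c2]; rewrite ?Hc, ?Hd;
      apply sumR_ext; intros; apply sumR_ext; intros; ring.
Qed.

Definition subspace (W : VF -> Prop) : Prop :=
  W vzero /\ forall u v l m, W u -> W v -> W (vlin l u m v).

Definition is_proj (W : VF -> Prop) (v p : VF) : Prop :=
  W p /\ forall w, W w -> L2K (vlin 1 v (-1) p) w = 0.

Section Projection.

Variable k : nat.

(* Adding a line [R r] orthogonal to [W'] to a space with projections keeps projections:
   the new projection is [proj' v + c r] with [c = <v - proj' v, r> / <r, r>]. *)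
Lemma proj_add_orth_line (W W' : VF -> Prop) r :
  (forall w, W w -> vpoly k w) -> subspace W -> W r -> (forall w, W' w -> W w) ->
  (forall w, W w -> exists z a, W' z /\ w = vlin 1 z a r) ->
  (forall w, W' w -> L2K r w = 0) ->
  (forall v, vpoly k v -> exists p, is_proj W' v p) ->
  forall v, vpoly k v -> exists p, is_proj W v p.
Proof.
  intros HQ [_ Hlin] Wr HW' Hdec Horth IH v Hv.
  destruct (IH v Hv) as (p' & Hp'W & Hp'). pose proof (HQ r Wr) as Qr.
  pose proof (HQ p' (HW' _ Hp'W)) as Qp'. set (d := vlin 1 v (-1) p') in Hp'.
  assert (Qd : vpoly k d) by (apply vpoly_lin; auto).
  set (c := if Req_EM_T (L2K r r) 0 then 0 else L2K d r / L2K r r).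
  exists (vlin 1 p' c r). split; [apply Hlin; auto|].
  intros w Hw. destruct (Hdec w Hw) as (z & a & Hz & ->).
  pose proof (HQ z (HW' _ Hz)) as Qz.
  replace (vlin 1 v (-1) (vlin 1 p' c r)) with (vlin 1 d (-c) r) by (unfold d; VF_ring).
  rewrite (L2K_lin_r k), !(L2K_lin k), (Hp' z Hz), (Horth z Hz)
    by (auto; apply vpoly_lin; auto).
  unfold c. destruct (Req_EM_T (L2K r r) 0) as [E|E].
  - rewrite (L2K_self_eq0_orth k d r), E by auto. ring.
  - field. auto.
Qed.

Lemma proj_exists (es : list VF) : forall W : VF -> Prop,
  (forall w, W w -> vpoly k w) -> subspace W -> (forall w, W w -> in_span es w) ->
  forall v, vpoly k v -> exists p, is_proj W v p.
Proof.
  induction es as [|e es IH]; intros W HQ HW Hsp.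
  { intros v _. exists vzero. split; [apply HW|]. intros w Hw. rewrite (Hsp w Hw). apply L2K_vzero. }
  destruct HW as [W0 Hlin].
  destruct (classic (exists ws s, W ws /\ in_span es s /\ ws = vlin 1 e 1 s))
    as [(ws & ss & Hws & Hss & Ews)|Hno].
  - set (W' := fun w => W w /\ in_span es w).
    assert (HW' : subspace W').
    { split; [split; auto; apply in_span_vzero|].
      intros u0 v0 l m [] []; split; [apply Hlin|apply in_span_vlin]; auto. }
    assert (IH' := IH W' (fun w Hw => HQ w (proj1 Hw)) HW' (fun w Hw => proj2 Hw)).
    destruct (IH' ws (HQ _ Hws)) as (q' & [Hq'W Hq'sp] & Hq').
    intros v Hv.
    apply (proj_add_orth_line W W' (vlin 1 ws (-1) q') HQ (conj W0 Hlin)); [| | | |exact IH'|exact Hv].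
    + apply Hlin; auto.
    + intros w [Hw _]; auto.
    + intros w Hw. destruct (Hsp w Hw) as (a & s & Hs & Ew).
      exists (vlin 1 (vlin 1 w (-a) ws) a q'), a. split; [split|].
      * apply Hlin; auto.
      * apply in_span_vlin; auto. replace (vlin 1 w (-a) ws) with (vlin 1 s (-a) ss)
          by (subst w ws; VF_ring). apply in_span_vlin; auto.
      * VF_ring.
    + intros w Hw. apply Hq'; auto.
  - apply (IH W); [auto|split; auto|]. intros w Hw. destruct (Hsp w Hw) as (a & s & Hs & Ew).
    destruct (Req_dec a 0) as [->|Ea]; [replace w with s by (subst; VF_ring); auto|].
    exfalso. apply Hno. exists (vlin (/ a) w 0 w), (vlin (/ a) s 0 s).
    split; [apply Hlin; auto|split; [apply in_span_vlin; auto|]].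
    subst w. apply VF_ext; intros; simpl; field; auto.
Qed.

End Projection.

Lemma proj_Phi k v : vpoly k v -> exists p, is_proj (in_Phi k) v p.
Proof.
  apply (proj_exists k (vmonomials k)).
  - apply in_Phi_vpoly.
  - split; [apply in_Phi_vzero|intros; apply in_Phi_vlin; auto].
  - intros; apply vpoly_in_span, in_Phi_vpoly; auto.
Qed.

(** * Divergence-free fields with a prescribed normal trace *)

(* [4 λ λ'], with [λ, λ'] the barycentric coordinates of the endpoints of [f], equals
   [1 - t^2] on [f] (in the variable [t ∈ [-1, 1]]) and vanishes on the other edges. *)
Definition edge_bubble (f : edge) (i : nat) : R -> R -> R :=
  match f with
  | Ebot => fun x y => 4 * x * (1 - x - y) * dlegendre i (2 * x - 1)
  | Ehyp => fun x y => 4 * x * y * dlegendre i (2 * y - 1)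
  | Eleft => fun x y => 4 * y * (1 - x - y) * dlegendre i (1 - 2 * y)
  end.

Definition tpar (g : edge) (s : R) : R := 2 * s / elen g - 1.

Lemma edge_bubble_bpoly k f i : (1 <= i <= k)%nat -> bpoly (S k) (edge_bubble f i).
Proof.
  intros Hi.
  assert (H2 : forall a1 b1 c1 a2 b2 c2 al be ga, bpoly (S k) (fun x y =>
    (a1 + b1 * x + c1 * y) * (a2 + b2 * x + c2 * y) * dlegendre i (al * x + be * y + ga))).
  { intros. assert (Haff : forall a b c, bpoly 1 (fun x y => a + b * x + c * y))
      by (intros a b c; exists a, (fun _ _ => b), (fun _ _ => c);
          split; [exists b; auto|split; [exists c; auto|fext; ring]]).
    apply bpoly_le with ((1 + 1) + pred i)%nat; [lia|].
    apply (bpoly_mul (1 + 1) (pred i) (fun x y => (a1 + b1 * x + c1 * y) * (a2 + b2 * x + c2 * y))).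
    - apply (bpoly_mul 1 1 (fun x y => a1 + b1 * x + c1 * y)); apply Haff.
    - apply bpoly_upoly_affine, dlegendre_upoly. }
  destruct f; [refine (bpoly_ext _ _ _ _ (H2 0 4 0 1 (-1) (-1) 2 0 (-1)))
    |refine (bpoly_ext _ _ _ _ (H2 0 4 0 0 0 1 0 2 (-1)))
    |refine (bpoly_ext _ _ _ _ (H2 0 0 4 1 (-1) (-1) 0 (-2) 1))];
    intros x y; simpl; match goal with |- _ * dlegendre i ?t = _ * dlegendre i ?t' =>
      replace t with t' by ring; ring end.
Qed.

Lemma edge_bubble_on_edge f i g s : edge_bubble f i (epx g s) (epy g s) =
  if edge_eqb f g then (1 - tpar g s ^ 2) * dlegendre i (tpar g s) else 0.
Proof.
  pose proof sqrt2_pos. unfold tpar. destruct f, g; simpl; try ring.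
  - replace (2 * s / 1 - 1) with (2 * s - 1) by field. ring.
  - replace (2 * (s / sqrt 2) - 1) with (2 * s / sqrt 2 - 1) by (field; lra). field. lra.
  - replace (2 * s / 1 - 1) with (1 - 2 * (1 - s)) by field. ring.
Qed.

Lemma is_derive_bubble_on_edge i g s :
  is_derive (fun s => (1 - tpar g s ^ 2) * dlegendre i (tpar g s)) s
    (2 / elen g * (- (INR i * (INR i + 1)) * leg_edge g i s)).
Proof.
  pose proof (elen_pos g).
  assert (Dt : is_derive (tpar g) s (2 / elen g)).
  { eapply is_derive_ext_eq; [| |exact (is_derive_affine (2 / elen g) (-1) s)];
      intros; unfold tpar; [field|]; lra. }
  eapply is_derive_ext_eq; [| |exact (is_derive_comp _ _ s _ _ (legendre_ode i (tpar g s)) Dt)];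
    [reflexivity|]. reflexivity.
Qed.

Lemma curl_vpoly k psi : bpoly (S k) psi -> vpoly k (curl psi).
Proof.
  intros H. destruct (bpoly_pd _ _ H) as (_ & Hx & Hy). split; simpl; auto.
  eapply bpoly_ext; [|apply (bpoly_scal _ _ (-1) Hx)]. intros; simpl; ring.
Qed.

Lemma curl_div_free k psi : bpoly k psi -> div_free (curl psi).
Proof.
  intros H x y. destruct (bpoly_pd _ _ H) as (C & Hx & Hy).
  destruct (line_derivable_lin (pdx psi) (pdx psi) (-1) 0 (bpoly_line_derivable _ _ Hx)
    (bpoly_line_derivable _ _ Hx)) as [_ [E _]].
  change (pdx (pdy psi) x y + pdy (fun x y => - pdx psi x y) x y = 0).
  replace (fun x y => - pdx psi x y) with (fun x y => -1 * pdx psi x y + 0 * pdx psi x y)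
    by (fext; ring).
  rewrite E, (bpoly_pd_comm _ _ H). ring.
Qed.

Lemma ntrace_curl_bubble k f i g s : (1 <= i <= k)%nat ->
  ntrace (curl (edge_bubble f i)) g s =
  if edge_eqb f g then 2 / elen g * (- (INR i * (INR i + 1)) * leg_edge g i s) else 0.
Proof.
  intros Hi.
  pose proof (ntrace_curl _ (bpoly_line_derivable _ _ (edge_bubble_bpoly k f i Hi)) g s) as D.
  rewrite <- (is_derive_unique _ _ _ D). apply is_derive_unique.
  destruct (edge_eqb f g) eqn:E;
    [eapply is_derive_ext_eq; [| |apply is_derive_bubble_on_edge]
    |eapply is_derive_ext_eq; [| |exact (is_derive_const 0 s)]];
    intros; rewrite ?edge_bubble_on_edge, ?E; reflexivity.
Qed.

Definition edge_field (k : nat) (f : edge) (i : nat) (V : VF) : Prop :=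
  vpoly k V /\ div_free V /\ (forall w, in_Phi k w -> L2K V w = 0) /\
  (forall g s, 0 <= s <= elen g -> ntrace V g s = if edge_eqb f g then leg_edge g i s else 0).

(* Rescale [curl (edge_bubble f i)] and subtract its projection onto [Phi_k], which has
   zero normal trace. *)
Lemma edge_field_exists k f i : (1 <= i <= k)%nat -> exists V, edge_field k f i V.
Proof.
  intros Hi. pose proof (elen_pos f). assert (0 < INR i) by (apply lt_0_INR; lia).
  set (kap := 2 / elen f * (- (INR i * (INR i + 1)))).
  assert (Hk : kap <> 0).
  { unfold kap. apply Rmult_integral_contrapositive; split;
      [apply Rgt_not_eq, Rdiv_lt_0_compat; lra|nra]. }
  pose proof (curl_vpoly k _ (edge_bubble_bpoly k f i Hi)) as Qc.
  set (B := vlin (/ kap) (curl (edge_bubble f i)) 0 (curl (edge_bubble f i))).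
  assert (QB : vpoly k B) by (apply vpoly_lin; auto).
  assert (DB : div_free B)
    by (apply (div_free_vlin k); auto; apply (curl_div_free (S k)), edge_bubble_bpoly; auto).
  destruct (proj_Phi k B QB) as (p & Hp & Hperp). pose proof (in_Phi_vpoly _ _ Hp) as Qp.
  exists (vlin 1 B (-1) p). split; [|split; [|split]].
  - apply vpoly_lin; auto.
  - apply (div_free_vlin k); auto. apply Hp.
  - auto.
  - intros g s Hs. destruct Hp as (_ & _ & Tp).
    rewrite ntrace_vlin, Tp by auto. unfold B. rewrite ntrace_vlin, (ntrace_curl_bubble k) by auto.
    destruct (edge_eqb f g) eqn:E; [|ring].
    replace g with f by (destruct f, g; easy). unfold kap. field. lra.
Qed.

Lemma edge_field_moment k f i V g j : edge_field k f i V ->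
  edge_moment g j (ntrace V g) = if (edge_eqb f g && Nat.eqb i j)%bool then leg_norm g j else 0.
Proof.
  intros (_ & _ & _ & T). rewrite (edge_moment_ext g j _ (fun s => if edge_eqb f g
    then leg_edge g i s else 0)) by (intros; apply T; auto).
  destruct (edge_eqb f g); simpl; [apply edge_moment_leg_edge|].
  rewrite edge_moment_const; destruct j; simpl; ring.
Qed.

(** * The decomposition *)

Definition edge_part (k : nat) (V : edge -> nat -> VF) : VF :=
  vsum (fun i => vadd (vadd (V Ebot (S i)) (V Ehyp (S i))) (V Eleft (S i))) k.

Lemma decomp_sum_edge_part k v0 v1 V : decomp_sum k v0 v1 V = vadd (vadd v0 v1) (edge_part k V).
Proof. reflexivity. Qed.

Lemma ntrace_edge_part k V g s : ntrace (edge_part k V) g s =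
  sumR (fun i => ntrace (V Ebot (S i)) g s + ntrace (V Ehyp (S i)) g s + ntrace (V Eleft (S i)) g s) k.
Proof. unfold edge_part. rewrite ntrace_vsum. apply sumR_ext; intros. rewrite !ntrace_vadd; auto. Qed.

Lemma edge_part_vpoly_div_free k V :
  (forall f i, (1 <= i <= k)%nat -> vpoly k (V f i) /\ div_free (V f i)) ->
  vpoly k (edge_part k V) /\ div_free (edge_part k V).
Proof.
  intros HV. assert (H : forall i, (i < k)%nat ->
    vpoly k (vadd (vadd (V Ebot (S i)) (V Ehyp (S i))) (V Eleft (S i))) /\
    div_free (vadd (vadd (V Ebot (S i)) (V Ehyp (S i))) (V Eleft (S i)))).
  { intros i Hi. destruct (HV Ebot (S i)) as [Qb Db], (HV Ehyp (S i)) as [Qh Dh],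
      (HV Eleft (S i)) as [Ql Dl]; try lia.
    rewrite !vadd_vlin. split; [apply vpoly_lin; [apply vpoly_lin|]; auto|].
    apply (div_free_vlin k); [apply vpoly_lin|auto|apply (div_free_vlin k)|]; auto. }
  split; [apply vpoly_vsum|apply (div_free_vsum k)]; intros; apply H; auto.
Qed.

Lemma vsum_veq F G n : (forall i, (i < n)%nat -> veq (F i) (G i)) -> veq (vsum F n) (vsum G n).
Proof.
  induction n; intros H x y; simpl; [split; auto|].
  destruct (IHn (fun i Hi => H i ltac:(lia)) x y) as [A B], (H n ltac:(lia) x y) as [C D].
  rewrite A, B, C, D; split; auto.
Qed.

Lemma edge_part_veq k V W : (forall f i, (1 <= i <= k)%nat -> veq (V f i) (W f i)) ->
  veq (edge_part k V) (edge_part k W).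
Proof.
  intros H. apply vsum_veq. intros i Hi x y. simpl.
  destruct (H Ebot (S i) ltac:(lia) x y) as [-> ->], (H Ehyp (S i) ltac:(lia) x y) as [-> ->],
    (H Eleft (S i) ltac:(lia) x y) as [-> ->].
  split; auto.
Qed.

Lemma is_const_vconst v : is_const v -> exists a b, v = vconst a b.
Proof. intros (a & b & H). exists a, b. apply VF_ext; intros; apply H. Qed.

Lemma edge_moment0_ntrace_vconst g a b :
  edge_moment g 0 (ntrace (vconst a b) g) = (a * enx g + b * eny g) * elen g.
Proof.
  change (ntrace (vconst a b) g) with (fun _ : R => a * enx g + b * eny g).
  rewrite edge_moment_const. reflexivity.
Qed.

Lemma is_decomp_vpoly k u v0 v1 V : is_decomp k u v0 v1 V ->
  forall f i, (1 <= i <= k)%nat -> vpoly k (V f i).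
Proof. intros (_ & _ & _ & H) f i Hi. apply is_Pk2_vpoly, (H f i Hi). Qed.

Lemma sum_edges_single (F : edge -> R) g : (forall f, f <> g -> F f = 0) ->
  F Ebot + F Ehyp + F Eleft = F g.
Proof.
  intros H. destruct g;
    [rewrite (H Ehyp), (H Eleft)|rewrite (H Ebot), (H Eleft)|rewrite (H Ebot), (H Ehyp)];
    try discriminate; ring.
Qed.

(* Testing [u = v0 + v1 + sum V] against [scrL g j]: [v0] has no normal trace and every
   [V f i] but [V g j] is orthogonal to it. *)
Lemma is_decomp_moment k u v0 v1 V : is_decomp k u v0 v1 V -> forall g j, (j <= k)%nat ->
  edge_moment g j (ntrace u g) =
  edge_moment g j (ntrace v1 g) + (if Nat.eqb j 0 then 0 else edge_moment g j (ntrace (V g j) g)).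
Proof.
  intros Hd g j Hj. pose proof (is_decomp_vpoly _ _ _ _ _ Hd) as QV.
  destruct Hd as (Heq & (_ & _ & T0) & Hc & HV). destruct (is_const_vconst _ Hc) as (a & b & ->).
  assert (CV : forall f i s, (i < k)%nat -> continuous (ntrace (V f (S i)) g) s)
    by (intros; apply (ntrace_continuous k); apply QV; lia).
  assert (Z : forall f i, (i < k)%nat -> (g <> f \/ j <> S i) ->
              edge_moment g j (ntrace (V f (S i)) g) = 0).
  { intros f i Hi Hne. apply (L2B_scrL_eq0 k); [apply QV; lia|].
    apply (HV f (S i) ltac:(lia)); auto. }
  rewrite (edge_moment_ext g j _ (fun s => ntrace (vconst a b) g s + sumR (fun i =>
    ntrace (V Ebot (S i)) g s + ntrace (V Ehyp (S i)) g s + ntrace (V Eleft (S i)) g s) k)).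
  2: { intros s Hs. rewrite (ntrace_veq _ _ Heq), decomp_sum_edge_part, !ntrace_vadd, T0,
         ntrace_edge_part by auto. ring. }
  assert (CS : forall i s, (i < k)%nat -> continuous (fun s => ntrace (V Ebot (S i)) g s
    + ntrace (V Ehyp (S i)) g s + ntrace (V Eleft (S i)) g s) s)
    by (intros; apply continuous_Rplus; [apply continuous_Rplus|]; apply CV; lia).
  rewrite edge_moment_plus, edge_moment_sumR by (auto; intros;
    first [apply (ntrace_continuous k), vpoly_const|apply continuous_sumR; auto]).
  f_equal. rewrite (sumR_ext _ (fun i => edge_moment g j (ntrace (V Ebot (S i)) g)
    + edge_moment g j (ntrace (V Ehyp (S i)) g) + edge_moment g j (ntrace (V Eleft (S i)) g)))
    by (intros; rewrite 2!edge_moment_plus; auto; intros; apply continuous_Rplus; auto).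
  destruct j as [|j0]; simpl.
  - apply sumR_eq0. intros i Hi. rewrite !Z by (auto; lia). ring.
  - rewrite (sumR_single _ j0) by (lia || (intros i Hi Hne; rewrite !Z by (auto; right; congruence);
      ring)).
    apply (sum_edges_single (fun f => edge_moment g (S j0) (ntrace (V f (S j0)) g))).
    intros f Hf. apply Z; [lia|left; auto].
Qed.

Lemma in_Phi_of_moments k D : vpoly k D -> div_free D ->
  (forall g j, (j <= k)%nat -> edge_moment g j (ntrace D g) = 0) -> in_Phi k D.
Proof.
  intros HD Hdiv H. split; [apply is_Pk2_vpoly; auto|split; auto].
  intros f s _. apply (edge_moments_eq0 f k); auto. apply ntrace_upoly; auto.
Qed.

Lemma in_Phi_orth_eq0 k D : in_Phi k D -> (forall w, in_Phi k w -> L2K D w = 0) ->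
  forall x y, c1 D x y = 0 /\ c2 D x y = 0.
Proof. intros HD H. apply (L2K_eq0 k); [apply in_Phi_vpoly|apply H]; auto. Qed.

Lemma is_decomp_const_unique k u v0 v1 V w0 w1 W :
  is_decomp k u v0 v1 V -> is_decomp k u w0 w1 W -> v1 = w1.
Proof.
  intros Hv Hw.
  assert (E0 : forall g, edge_moment g 0 (ntrace v1 g) = edge_moment g 0 (ntrace w1 g)).
  { intros g. pose proof (is_decomp_moment _ _ _ _ _ Hv g 0 ltac:(lia)).
    pose proof (is_decomp_moment _ _ _ _ _ Hw g 0 ltac:(lia)). simpl in *. lra. }
  destruct Hv as (_ & _ & Hv1 & _), Hw as (_ & _ & Hw1 & _).
  destruct (is_const_vconst _ Hv1) as (a & b & ->), (is_const_vconst _ Hw1) as (a' & b' & ->).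
  pose proof (E0 Ebot) as Eb. pose proof (E0 Eleft) as El.
  rewrite !edge_moment0_ntrace_vconst in Eb, El. simpl in Eb, El.
  f_equal; lra.
Qed.

(* [V f i - W f i] has no normal moments, so it lies in [Phi_k] and in its orthogonal. *)
Lemma is_decomp_edge_unique k u v0 v1 V w0 w1 W :
  is_decomp k u v0 v1 V -> is_decomp k u w0 w1 W ->
  forall f i, (1 <= i <= k)%nat -> veq (V f i) (W f i).
Proof.
  intros Hv Hw f i Hi. pose proof (is_decomp_const_unique _ _ _ _ _ _ _ _ Hv Hw) as E1.
  pose proof (is_decomp_vpoly _ _ _ _ _ Hv f i Hi) as QV.
  pose proof (is_decomp_vpoly _ _ _ _ _ Hw f i Hi) as QW.
  assert (Ef : edge_moment f i (ntrace (V f i) f) = edge_moment f i (ntrace (W f i) f)).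
  { pose proof (is_decomp_moment _ _ _ _ _ Hv f i ltac:(lia)) as EV.
    pose proof (is_decomp_moment _ _ _ _ _ Hw f i ltac:(lia)) as EW.
    subst w1. destruct (Nat.eqb_spec i 0); [lia|]. lra. }
  destruct Hv as (_ & _ & _ & HV), Hw as (_ & _ & _ & HW).
  destruct (HV f i Hi) as (_ & HVp & HVd & HVo), (HW f i Hi) as (_ & HWp & HWd & HWo).
  set (D := vlin 1 (V f i) (-1) (W f i)).
  assert (PD : in_Phi k D).
  { apply in_Phi_of_moments; [apply vpoly_lin; auto|apply (div_free_vlin k); auto|].
    intros g j Hj.
    replace (ntrace D g) with (fun s => 1 * ntrace (V f i) g s + (-1) * ntrace (W f i) g s)
      by (fext; unfold D; rewrite ntrace_vlin; reflexivity).
    rewrite edge_moment_lin by (intros; apply (ntrace_continuous k); auto).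
    assert (Hor : (g = f /\ j = i) \/ (g <> f \/ j <> i))
      by (destruct (classic (g = f)), (Nat.eq_dec j i); tauto).
    destruct Hor as [[-> ->]|Hne]; [rewrite Ef; ring|].
    rewrite (proj1 (L2B_scrL_eq0 k (V f i) g j QV) (HVo g j Hj Hne)),
      (proj1 (L2B_scrL_eq0 k (W f i) g j QW) (HWo g j Hj Hne)). ring. }
  assert (QD : forall w, in_Phi k w -> L2K D w = 0).
  { intros w Hw. unfold D. rewrite (L2K_lin k), HVp, HWp; auto; [ring|apply in_Phi_vpoly; auto]. }
  intros x y. destruct (in_Phi_orth_eq0 k D PD QD x y) as [A B].
  unfold D in A, B; simpl in A, B. split; lra.
Qed.

Lemma is_decomp_unique k u v0 v1 V w0 w1 W :
  is_decomp k u v0 v1 V -> is_decomp k u w0 w1 W ->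
  veq v0 w0 /\ veq v1 w1 /\ forall f i, (1 <= i <= k)%nat -> veq (V f i) (W f i).
Proof.
  intros Hv Hw. pose proof (is_decomp_const_unique _ _ _ _ _ _ _ _ Hv Hw) as <-.
  pose proof (is_decomp_edge_unique _ _ _ _ _ _ _ _ Hv Hw) as HVW.
  split; [|split; [intros x y; split; auto|auto]].
  pose proof (edge_part_veq k V W HVW) as S.
  destruct Hv as (Hveq & _), Hw as (Hweq & _). intros x y.
  destruct (Hveq x y) as [A1 A2], (Hweq x y) as [B1 B2], (S x y) as [S1 S2].
  rewrite decomp_sum_edge_part in *. simpl in A1, A2, B1, B2. split; lra.
Qed.

Definition ncoef (u : VF) (g : edge) (j : nat) : R := edge_moment g j (ntrace u g) / leg_norm g j.

(* The mean normal fluxes through the three edges sum to zero, so one constant field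
   carries all of them. *)
Lemma ntrace_vconst_mean_flux k u : vpoly k u -> div_free u ->
  forall g s, ntrace (vconst (- ncoef u Eleft 0) (- ncoef u Ebot 0)) g s = ncoef u g 0.
Proof.
  intros Hu Hdiv g s. pose proof (boundary_flux_eq0 k u Hu Hdiv) as Hf.
  change (ntrace (vconst _ _) g s) with ((- ncoef u Eleft 0) * enx g + (- ncoef u Ebot 0) * eny g).
  unfold ncoef. rewrite !edge_moment0, !leg_norm0. pose proof sqrt2_pos.
  destruct g; simpl in *; [field| |field].
  replace (RInt (ntrace u Ehyp) 0 (sqrt 2))
    with (- (RInt (ntrace u Ebot) 0 1 + RInt (ntrace u Eleft) 0 1)) by lra.
  field. lra.
Qed.

Lemma ntrace_edge_fields_sum k (E : edge -> nat -> VF) (c : edge -> nat -> R) :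
  (forall f i, (1 <= i <= k)%nat -> edge_field k f i (E f i)) ->
  forall g s, 0 <= s <= elen g ->
  ntrace (edge_part k (fun f i => vlin (c f i) (E f i) 0 (E f i))) g s
  = sumR (fun i => c g (S i) * leg_edge g (S i) s) k.
Proof.
  intros HE g s Hs. rewrite ntrace_edge_part. apply sumR_ext. intros i Hi. rewrite !ntrace_vlin.
  destruct (HE Ebot (S i)) as (_ & _ & _ & Tb), (HE Ehyp (S i)) as (_ & _ & _ & Th),
    (HE Eleft (S i)) as (_ & _ & _ & Tl); try lia.
  rewrite Tb, Th, Tl by auto. destruct g; simpl; ring.
Qed.

Lemma edge_fields_choice k :
  exists E : edge -> nat -> VF, forall f i, (1 <= i <= k)%nat -> edge_field k f i (E f i).
Proof.
  destruct (functional_choice (fun (fi : edge * nat) V => (1 <= snd fi <= k)%nat ->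
    edge_field k (fst fi) (snd fi) V)) as [E HE].
  - intros [f i]. destruct (classic (1 <= i <= k)%nat) as [Hi|Hi];
      [destruct (edge_field_exists k f i Hi) as [V HV]; exists V; auto|exists vzero; tauto].
  - exists (fun f i => E (f, i)). intros f i Hi. apply (HE (f, i)), Hi.
Qed.

Lemma is_decomp_exists k u : is_Pk2 k u -> div_free u -> exists v0 v1 V, is_decomp k u v0 v1 V.
Proof.
  intros Hu Du. apply is_Pk2_vpoly in Hu. destruct (edge_fields_choice k) as [E HE].
  set (V := fun f i => vlin (ncoef u f i) (E f i) 0 (E f i)).
  set (v1 := vconst (- ncoef u Eleft 0) (- ncoef u Ebot 0)).
  assert (QV : forall f i, (1 <= i <= k)%nat -> vpoly k (V f i) /\ div_free (V f i))
    by (intros; split; [apply vpoly_lin|apply (div_free_vlin k)]; apply HE; auto).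
  destruct (edge_part_vpoly_div_free k V QV) as [QS DS].
  exists (vlin 1 u (-1) (vadd v1 (edge_part k V))), v1, V. split; [|split; [|split]].
  - intros x y. rewrite decomp_sum_edge_part. simpl. split; ring.
  - split; [|split].
    + apply is_Pk2_vpoly, vpoly_lin, vpoly_vadd; auto; apply vpoly_const.
    + apply (div_free_vlin k); auto; [apply vpoly_vadd; auto; apply vpoly_const|].
      rewrite vadd_vlin. apply (div_free_vlin k); auto; [apply vpoly_const|apply div_free_vconst].
    + intros g s Hs. rewrite ntrace_vlin, ntrace_vadd, (ntrace_vconst_mean_flux k u) by auto.
      unfold V. rewrite (ntrace_edge_fields_sum k E (ncoef u)) by auto.
      rewrite (edge_legendre_expansion g k (ntrace u g) (ntrace_upoly k u g Hu) s),
        sumR_recl, leg_edge0.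
      unfold ncoef. ring.
  - exists (- ncoef u Eleft 0), (- ncoef u Ebot 0). intros; split; reflexivity.
  - intros f i Hi. split; [apply is_Pk2_vpoly, QV; auto|split; [|split; [apply QV; auto|]]].
    + intros w Hw. destruct (HE f i Hi) as (_ & _ & PE & _). unfold V.
      rewrite (L2K_lin k), PE by (auto; first [apply HE; auto|apply in_Phi_vpoly; auto]). ring.
    + intros g j Hj Hne. apply (L2B_scrL_eq0 k); [apply QV; auto|].
      rewrite (edge_moment_ext g j _ (fun s => ncoef u f i * ntrace (E f i) g s
        + 0 * ntrace (E f i) g s)) by (intros; apply ntrace_vlin).
      rewrite edge_moment_lin, (edge_field_moment k f i)
        by (auto; intros; apply (ntrace_continuous k); apply HE; auto).
      destruct (edge_eqb f g) eqn:Efg, (Nat.eqb_spec i j); simpl; try ring.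
      exfalso. destruct Hne as [Hne|]; [destruct f, g; easy|auto].
Qed.

Theorem proposition10 (k : nat) (u : VF) :
  is_Pk2 k u -> div_free u ->
  (exists (v0 v1 : VF) (V : edge -> nat -> VF), is_decomp k u v0 v1 V) /\
  (forall (v0 v1 : VF) (V : edge -> nat -> VF) (w0 w1 : VF) (W : edge -> nat -> VF),
     is_decomp k u v0 v1 V -> is_decomp k u w0 w1 W ->
     veq v0 w0 /\ veq v1 w1 /\
     (forall f i, (1 <= i <= k)%nat -> veq (V f i) (W f i))).
Proof.
  intros Hu Du. split.
  - apply is_decomp_exists; auto.
  - intros v0 v1 V w0 w1 W Hv Hw. apply (is_decomp_unique k u v0 v1 V w0 w1 W Hv Hw).
Qed.
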